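(* Let $K:\mathbb{R}\to\mathbb{R}$ be the Gaussian kernel $K(t)=\exp(-t^2)$. Let $d\ge 1$ be an integer. For every continuous $f:[0,1]^d\to\mathbb{R}$ and every $\varepsilon>0$ there exist positive integers $G,G'$, real weights $w_{pqm}, w_{qm'}$, real centroids $c_{pqm},c_{qm'}$ and positive smoothness parameters $\sigma_{pqm},\sigma_{qm'}$ (for $1\le p\le d$, $1\le q\le 2d+1$, $1\le m\le G$, $1\le m'\le G'$) such that the two-layer RBF-KAN network $$g(x_1,\dots,x_d)=\sum_{q=1}^{2d+1}\sum_{m'=1}^{G'} w_{qm'}\,K\!\left(\frac{y_q(x)-c_{qm'}}{\sigma_{qm'}}\right),\qquad y_q(x)=\sum_{p=1}^{d}\sum_{m=1}^{G} w_{pqm}\,K\!\left(\frac{x_p-c_{pqm}}{\sigma_{pqm}}\right),$$ satisfies $\sup_{x\in[0,1]^d}|f(x)-g(x)|<\varepsilon$.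
   Context: An RBF-KAN network is a Kolmogorov–Arnold-type network in which every univariate component function is a finite linear combination of radial basis functions $t\mapsto w\,K((t-c)/\sigma)$ with weight $w$, centroid $c$ and smoothness parameter $\sigma>0$; here $K$ is the Gaussian kernel. *)

From Stdlib Require Import Reals.
Open Scope R_scope.

Definition K (t : R) : R := exp (- (t * t)).

Fixpoint rsum (n : nat) (F : nat -> R) : R :=
  match n with
  | O => 0
  | S k => rsum k F + F k
  end.

(* Points of R^d are functions nat -> R; only coordinates 0..d-1 matter. *)
Definition in_cube (d : nat) (x : nat -> R) : Prop :=
  forall p, (p < d)%nat -> 0 <= x p <= 1.

Definition cont_on_cube (d : nat) (f : (nat -> R) -> R) : Prop :=
  forall x, in_cube d x -> forall eps, 0 < eps -> exists delta, 0 < delta /\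
    forall y, in_cube d y -> (forall p, (p < d)%nat -> Rabs (y p - x p) < delta) ->
      Rabs (f y - f x) < eps.

Definition depends_on_first (d : nat) (f : (nat -> R) -> R) : Prop :=
  forall x y, (forall p, (p < d)%nat -> x p = y p) -> f x = f y.

(* Inner function y_q(x) (0-based indices: p < d, m < G). *)
Definition inner (d G : nat) (w c s : nat -> nat -> nat -> R) (q : nat) (x : nat -> R) : R :=
  rsum d (fun p => rsum G (fun m => w p q m * K ((x p - c p q m) / s p q m))).

Definition rbf_kan (d G G' : nat) (w c s : nat -> nat -> nat -> R)
  (w' c' s' : nat -> nat -> R) (x : nat -> R) : R :=
  rsum (2 * d + 1) (fun q => rsum G' (fun m' =>
    w' q m' * K ((inner d G w c s q x - c' q m') / s' q m'))).

From Stdlib Require Import Reals Lra Lia Psatz ZArith List ClassicalEpsilon Classical.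
Open Scope R_scope.

(* First, [f] is approximated by Kolmogorov-Arnold superpositions
   [sum_(q < 2d+1) H_q (sum_(p < d) phi_pq (x_p))] with Lipschitz inner and outer functions.  Given
   one with error [B], use [2d+1] grids shifted against each other, so that every [x] lies off the
   short transition ramps of at least [d+1] of them.  Slightly moved inner functions, constant on each
   cell outside its ramp, take distinct lattice values on distinct cells; so new outer terms can add a
   [1/(d+1)] share of the residual on those grids while staying below [B/(d+1)] on the at most [d]
   others.  This cuts the error to [d/(d+1) B] plus an arbitrarily small term (the old outer terms
   barely notice the moved inner functions), and iterating makes it arbitrarily small.
   Second, every Lipschitz function of one variable is uniformly approximated on an interval by sums of
   Gaussians: in [y = (exp t - exp a) / D] a Bernstein polynomial becomes a sum of terms [w exp (b t)],
   and [w exp (b t)] times [exp (-(t/s)^2)], which is close to [1] for large [s], is a Gaussian of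
   width [s] centred at [b s^2 / 2]. *)

(** * Finite sums and Lipschitz functions *)

Lemma rsum_ext n F G : (forall k, (k < n)%nat -> F k = G k) -> rsum n F = rsum n G.
Proof.
  induction n as [|n IH]; intros HFG; simpl; [reflexivity|].
  rewrite IH, HFG; [reflexivity | lia | intros; apply HFG; lia].
Qed.

Lemma rsum_plus n F G : rsum n (fun k => F k + G k) = rsum n F + rsum n G.
Proof. induction n; simpl; [lra|]. rewrite IHn. lra. Qed.

Lemma rsum_minus n F G : rsum n (fun k => F k - G k) = rsum n F - rsum n G.
Proof. induction n; simpl; [lra|]. rewrite IHn. lra. Qed.

Lemma rsum_scal n c F : rsum n (fun k => c * F k) = c * rsum n F.
Proof. induction n; simpl; [lra|]. rewrite IHn. lra. Qed.

Lemma rsum_const n c : rsum n (fun _ => c) = INR n * c.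
Proof. induction n; simpl rsum; [simpl; lra|]. rewrite IHn, S_INR. lra. Qed.

Lemma rsum_le n F G : (forall k, (k < n)%nat -> F k <= G k) -> rsum n F <= rsum n G.
Proof.
  induction n as [|n IH]; intros HFG; simpl; [lra|].
  apply Rplus_le_compat; [apply IH; intros|]; apply HFG; lia.
Qed.

Lemma rsum_nonneg n F : (forall k, (k < n)%nat -> 0 <= F k) -> 0 <= rsum n F.
Proof. intros HF. rewrite <- (Rmult_0_r (INR n)), <- rsum_const. now apply rsum_le. Qed.

Lemma rsum_abs n F : Rabs (rsum n F) <= rsum n (fun k => Rabs (F k)).
Proof.
  induction n; simpl; [rewrite Rabs_R0; lra|].
  eapply Rle_trans; [apply Rabs_triang | lra].
Qed.

Lemma rsum_abs_le n F c :
  (forall k, (k < n)%nat -> Rabs (F k) <= c) -> Rabs (rsum n F) <= INR n * c.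
Proof. intros HF. rewrite <- rsum_const. eapply Rle_trans; [apply rsum_abs | now apply rsum_le]. Qed.

Lemma rsum_split m n F : rsum (m + n) F = rsum m F + rsum n (fun k => F (m + k)%nat).
Proof.
  induction n; simpl; [rewrite Nat.add_0_r; lra|].
  rewrite Nat.add_succ_r. simpl. rewrite IHn. lra.
Qed.

Lemma rsum_succ_l n F : rsum (S n) F = F O + rsum n (fun k => F (S k)).
Proof. change (S n) with (1 + n)%nat. rewrite rsum_split. simpl. lra. Qed.

Lemma rsum_swap n m (F : nat -> nat -> R) :
  rsum n (fun i => rsum m (F i)) = rsum m (fun j => rsum n (fun i => F i j)).
Proof.
  induction n; simpl; [rewrite rsum_const; lra|].
  rewrite IHn, <- rsum_plus. reflexivity.
Qed.

Lemma rsum_telescope n v : rsum n (fun k => v (S k) - v k) = v n - v O.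
Proof. induction n; simpl; [lra|]. rewrite IHn. lra. Qed.

Lemma rsum_zero_tail m n F :
  (m <= n)%nat -> (forall k, (m <= k < n)%nat -> F k = 0) -> rsum n F = rsum m F.
Proof.
  intros Hmn HF. replace n with (m + (n - m))%nat by lia. rewrite rsum_split.
  rewrite (rsum_ext (n - m) _ (fun _ => 0)), rsum_const by (intros; apply HF; lia). ring.
Qed.

Lemma rsum_term_le n F i :
  (forall k, (k < n)%nat -> 0 <= F k) -> (i < n)%nat -> F i <= rsum n F.
Proof.
  intros HF Hi.
  replace n with (i + S (n - S i))%nat by lia. rewrite rsum_split, rsum_succ_l, Nat.add_0_r.
  assert (0 <= rsum i F) by (apply rsum_nonneg; intros; apply HF; lia).
  assert (0 <= rsum (n - S i) (fun k => F (i + S k)%nat)) by (apply rsum_nonneg; intros; apply HF; lia).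
  lra.
Qed.

Lemma rsum_single n F i :
  (i < n)%nat -> (forall k, (k < n)%nat -> k <> i -> F k = 0) -> rsum n F = F i.
Proof.
  intros Hi HF.
  replace n with (i + S (n - S i))%nat by lia. rewrite rsum_split, rsum_succ_l, Nat.add_0_r.
  rewrite (rsum_ext i _ (fun _ => 0)), (rsum_ext (n - S i) _ (fun _ => 0)), !rsum_const
    by (intros; apply HF; lia).
  ring.
Qed.

Lemma Rabs_rsum_one_nonzero n F c :
  (forall k, (k < n)%nat -> Rabs (F k) <= c) ->
  (forall i j, (i < n)%nat -> (j < n)%nat -> F i <> 0 -> F j <> 0 -> i = j) -> 0 <= c ->
  Rabs (rsum n F) <= c.
Proof.
  intros Hc Huniq Hc0.
  destruct (classic (exists i, (i < n)%nat /\ F i <> 0)) as [[i [Hi Fi]] | Hnone].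
  - rewrite (rsum_single n F i Hi); [now apply Hc|].
    intros k Hk Hki. apply NNPP. intros Fk. apply Hki. now apply Huniq.
  - rewrite (rsum_ext n _ (fun _ => 0)), rsum_const, Rmult_0_r, Rabs_R0; [lra|].
    intros k Hk. apply NNPP. intros Fk. apply Hnone. now exists k.
Qed.

Lemma Rabs_le_between a b : Rabs a <= b -> - b <= a <= b.
Proof. unfold Rabs. destruct Rcase_abs; lra. Qed.

Definition clamp (u : R) : R := Rmin 1 (Rmax 0 u).

Lemma clamp_range u : 0 <= clamp u <= 1.
Proof. unfold clamp, Rmin, Rmax; repeat destruct Rle_dec; lra. Qed.

Lemma clamp_1 u : 1 <= u -> clamp u = 1.
Proof. unfold clamp, Rmin, Rmax; repeat destruct Rle_dec; lra. Qed.

Lemma clamp_0 u : u <= 0 -> clamp u = 0.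
Proof. unfold clamp, Rmin, Rmax; repeat destruct Rle_dec; lra. Qed.

Definition lipschitz (L : R) (g : R -> R) : Prop :=
  forall a b, Rabs (g a - g b) <= L * Rabs (a - b).

Lemma lipschitz_clamp : lipschitz 1 clamp.
Proof.
  intros a b. rewrite Rmult_1_l.
  unfold clamp, Rmin, Rmax; repeat destruct Rle_dec; unfold Rabs; repeat destruct Rcase_abs; lra.
Qed.

Lemma lipschitz_const c : lipschitz 0 (fun _ => c).
Proof. intros a b. rewrite Rminus_diag, Rabs_R0, Rmult_0_l. lra. Qed.

Lemma lipschitz_plus L1 L2 g1 g2 :
  lipschitz L1 g1 -> lipschitz L2 g2 -> lipschitz (L1 + L2) (fun t => g1 t + g2 t).
Proof.
  intros H1 H2 a b. specialize (H1 a b). specialize (H2 a b).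
  replace (g1 a + g2 a - (g1 b + g2 b)) with ((g1 a - g1 b) + (g2 a - g2 b)) by ring.
  eapply Rle_trans; [apply Rabs_triang | lra].
Qed.

Lemma lipschitz_le L1 L2 g : lipschitz L1 g -> L1 <= L2 -> lipschitz L2 g.
Proof.
  intros H Hle a b. eapply Rle_trans; [apply H|].
  apply Rmult_le_compat_r; [apply Rabs_pos | exact Hle].
Qed.

Lemma lipschitz_scal L c g : lipschitz L g -> lipschitz (Rabs c * L) (fun t => c * g t).
Proof.
  intros H a b. rewrite <- Rmult_minus_distr_l, Rabs_mult, Rmult_assoc.
  apply Rmult_le_compat_l; [apply Rabs_pos | apply H].
Qed.

Lemma lipschitz_affine L g al be :
  lipschitz L g -> lipschitz (L * Rabs al) (fun t => g (al * t + be)).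
Proof.
  intros H a b. eapply Rle_trans; [apply H|].
  replace (al * a + be - (al * b + be)) with (al * (a - b)) by ring. rewrite Rabs_mult. lra.
Qed.

Lemma lipschitz_rsum n L (g : nat -> R -> R) :
  (forall k, (k < n)%nat -> lipschitz L (g k)) ->
  lipschitz (INR n * L) (fun t => rsum n (fun k => g k t)).
Proof.
  intros H a b. rewrite <- rsum_minus, Rmult_assoc, <- rsum_const.
  eapply Rle_trans; [apply rsum_abs | apply rsum_le]. intros k Hk. now apply H.
Qed.

Lemma lipschitz_nonneg L g : lipschitz L g -> 0 <= L.
Proof.
  intros H. specialize (H 1 0). rewrite Rminus_0_r, Rabs_R1, Rmult_1_r in H.
  eapply Rle_trans; [apply Rabs_pos | exact H].
Qed.

(** * Bernstein polynomials *)

(* The basis [binom n k y^k (1-y)^(n-k)], through the recursion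
   [b (n+1) k = y b n (k-1) + (1-y) b n k]. *)
Fixpoint bernstein (n k : nat) (y : R) : R :=
  match n with
  | O => match k with O => 1 | S _ => 0 end
  | S n' => y * (match k with O => 0 | S k' => bernstein n' k' y end) + (1 - y) * bernstein n' k y
  end.

Lemma bernstein_overflow n k y : (n < k)%nat -> bernstein n k y = 0.
Proof.
  revert k; induction n; intros k Hk; simpl; destruct k; try lia; [reflexivity|].
  rewrite !IHn by lia. ring.
Qed.

Lemma bernstein_nonneg n k y : 0 <= y <= 1 -> 0 <= bernstein n k y.
Proof.
  intros Hy; revert k; induction n; intros k; simpl; destruct k; try lra.
  - specialize (IHn O). nra.
  - specialize (IHn k) as H1. specialize (IHn (S k)). nra.
Qed.

Lemma bernstein_sum_succ n F y :
  rsum (S (S n)) (fun k => F k * bernstein (S n) k y) =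
  y * rsum (S n) (fun k => F (S k) * bernstein n k y)
  + (1 - y) * rsum (S n) (fun k => F k * bernstein n k y).
Proof.
  rewrite rsum_succ_l. simpl bernstein at 1.
  rewrite (rsum_ext _ (fun k => F (S k) * bernstein (S n) (S k) y)
    (fun k => y * (F (S k) * bernstein n k y) + (1 - y) * (F (S k) * bernstein n (S k) y)))
    by (intros; simpl; ring).
  rewrite rsum_plus, !rsum_scal, (rsum_succ_l n (fun k => F k * bernstein n k y)).
  replace (rsum (S n) (fun k => F (S k) * bernstein n (S k) y))
    with (rsum n (fun k => F (S k) * bernstein n (S k) y))
    by (simpl; rewrite (bernstein_overflow n (S n)) by lia; ring).
  ring.
Qed.

Lemma bernstein_moment0 n y : rsum (S n) (fun k => bernstein n k y) = 1.
Proof.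
  induction n; [simpl; ring|].
  rewrite (rsum_ext _ _ (fun k => 1 * bernstein (S n) k y)) by (intros; ring).
  rewrite bernstein_sum_succ.
  rewrite !(rsum_ext _ (fun k => 1 * bernstein n k y) (fun k => bernstein n k y)) by (intros; ring).
  rewrite IHn. ring.
Qed.

Lemma bernstein_moment1 n y : rsum (S n) (fun k => INR k * bernstein n k y) = INR n * y.
Proof.
  induction n; [simpl; ring|].
  rewrite bernstein_sum_succ.
  rewrite (rsum_ext _ (fun k => INR (S k) * bernstein n k y)
    (fun k => INR k * bernstein n k y + bernstein n k y)) by (intros; rewrite S_INR; ring).
  rewrite rsum_plus, IHn, bernstein_moment0, S_INR. ring.
Qed.

Lemma bernstein_moment2 n y :
  rsum (S n) (fun k => INR k * INR k * bernstein n k y) = INR n * y + INR n * (INR n - 1) * y * y.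
Proof.
  induction n; [simpl; ring|].
  rewrite bernstein_sum_succ.
  rewrite (rsum_ext _ (fun k => INR (S k) * INR (S k) * bernstein n k y)
    (fun k => INR k * INR k * bernstein n k y + (2 * (INR k * bernstein n k y) + bernstein n k y)))
    by (intros; rewrite S_INR; ring).
  rewrite !rsum_plus, rsum_scal, IHn, bernstein_moment1, bernstein_moment0, S_INR. ring.
Qed.

Lemma bernstein_variance n y : (1 <= n)%nat ->
  rsum (S n) (fun k => (y - INR k / INR n) ^ 2 * bernstein n k y) = y * (1 - y) / INR n.
Proof.
  intros Hn. assert (0 < INR n) by (apply lt_0_INR; lia).
  rewrite (rsum_ext _ _ (fun k => y * y * bernstein n k y + ((- 2 * y / INR n) * (INR k * bernstein n k y)
    + (1 / (INR n * INR n)) * (INR k * INR k * bernstein n k y)))) by (intros; field; lra).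
  rewrite !rsum_plus, !rsum_scal, bernstein_moment0, bernstein_moment1, bernstein_moment2.
  field. lra.
Qed.

Lemma Rabs_le_quad x eta : 0 < eta -> Rabs x <= eta + x ^ 2 / eta.
Proof.
  intros Heta. rewrite <- (pow2_abs x).
  assert (0 <= (Rabs x - eta) ^ 2 / eta) by (apply Rle_mult_inv_pos; [apply pow2_ge_0 | lra]).
  replace (eta + Rabs x ^ 2 / eta) with (2 * Rabs x + (Rabs x - eta) ^ 2 / eta) by (field; lra).
  pose proof (Rabs_pos x). lra.
Qed.

Lemma INR_div_unit k n : (k <= n)%nat -> (1 <= n)%nat -> 0 <= INR k / INR n <= 1.
Proof.
  intros Hk Hn. assert (0 < INR n) by (apply lt_0_INR; lia).
  split; [apply Rle_mult_inv_pos; [apply pos_INR | lra]|].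
  apply Rmult_le_reg_r with (INR n); [lra|]. field_simplify; [apply le_INR; lia | lra].
Qed.

(* The Lipschitz form of Bernstein's theorem: |u(y) - u(k/n)| <= L (eta + (y - k/n)^2 / eta), and
   the quadratic term averages to at most y (1 - y) / (eta n). *)
Theorem bernstein_approx (u : R -> R) L : 0 <= L ->
  (forall a b, 0 <= a <= 1 -> 0 <= b <= 1 -> Rabs (u a - u b) <= L * Rabs (a - b)) ->
  forall eps, 0 < eps -> exists n, (1 <= n)%nat /\ forall y, 0 <= y <= 1 ->
    Rabs (u y - rsum (S n) (fun k => u (INR k / INR n) * bernstein n k y)) <= eps.
Proof.
  intros HL Hu eps Heps.
  set (eta := eps / (2 * L + 1)).
  assert (Heta : 0 < eta) by (unfold eta; apply Rdiv_lt_0_compat; lra).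
  assert (HLeta : L * eta <= eps / 2).
  { unfold eta. apply Rmult_le_reg_r with (2 * L + 1); [lra|]. field_simplify; nra. }
  destruct (INR_archimed (eta * eps / 2) (L + 1)) as [n Hn]; [nra|].
  assert (Hn1 : (1 <= n)%nat) by (destruct n; [simpl in Hn; lra | lia]).
  exists n; split; [exact Hn1|]. intros y Hy.
  assert (HnR : 0 < INR n) by (apply lt_0_INR; lia).
  replace (u y) with (rsum (S n) (fun k => u y * bernstein n k y))
    by (rewrite rsum_scal, bernstein_moment0; ring).
  rewrite <- rsum_minus. eapply Rle_trans; [apply rsum_abs|].
  apply Rle_trans with (rsum (S n) (fun k => L * (eta * bernstein n k y
    + / eta * ((y - INR k / INR n) ^ 2 * bernstein n k y)))).
  { apply rsum_le. intros k Hk.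
    pose proof (INR_div_unit k n ltac:(lia) Hn1) as Hkn.
    pose proof (bernstein_nonneg n k y Hy) as Hb.
    rewrite <- Rmult_minus_distr_r, Rabs_mult, (Rabs_right (bernstein n k y)) by lra.
    pose proof (Rabs_le_quad (y - INR k / INR n) eta Heta).
    apply Rle_trans with (L * (eta + (y - INR k / INR n) ^ 2 / eta) * bernstein n k y).
    - apply Rmult_le_compat_r; [lra|].
      eapply Rle_trans; [now apply Hu | apply Rmult_le_compat_l; lra].
    - right. unfold Rdiv. ring. }
  rewrite rsum_scal, rsum_plus, !rsum_scal, bernstein_moment0, bernstein_variance by exact Hn1.
  assert (L * (/ eta * (y * (1 - y) / INR n)) <= eps / 2).
  { apply Rle_trans with (L / (eta * INR n)).
    - replace (L / (eta * INR n)) with (L * (/ eta * (1 / INR n))) by (field; lra).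
      apply Rmult_le_compat_l; [lra|]. apply Rmult_le_compat_l; [left; now apply Rinv_0_lt_compat|].
      apply Rmult_le_compat_r; [left; now apply Rinv_0_lt_compat | nra].
    - apply Rmult_le_reg_r with (eta * INR n); [nra|]. field_simplify; nra. }
  nra.
Qed.

(** * Approximation by sums of Gaussians *)

Definition exp_sum (l : list (R * R)) (t : R) : R :=
  fold_right (fun p acc => fst p * exp (snd p * t) + acc) 0 l.

Definition is_exp_sum (h : R -> R) : Prop := exists l, forall t, h t = exp_sum l t.

Lemma exp_sum_app l1 l2 t : exp_sum (l1 ++ l2) t = exp_sum l1 t + exp_sum l2 t.
Proof. induction l1; simpl; [ring|]. rewrite IHl1. ring. Qed.

Lemma exp_sum_shift l w b t :
  exp_sum (map (fun p => (w * fst p, b + snd p)) l) t = w * exp (b * t) * exp_sum l t.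
Proof. induction l; simpl; [ring|]. rewrite IHl, Rmult_plus_distr_r, exp_plus. ring. Qed.

Lemma exp_sum_mult l1 l2 t :
  exp_sum (flat_map (fun p => map (fun p' => (fst p * fst p', snd p + snd p')) l2) l1) t
  = exp_sum l1 t * exp_sum l2 t.
Proof. induction l1; simpl; [ring|]. rewrite exp_sum_app, exp_sum_shift, IHl1. ring. Qed.

Lemma is_exp_sum_ext f g : is_exp_sum f -> (forall t, f t = g t) -> is_exp_sum g.
Proof. intros [l H] E. exists l. intros t. now rewrite <- E. Qed.

Lemma is_exp_sum_exp w b : is_exp_sum (fun t => w * exp (b * t)).
Proof. exists ((w, b) :: nil). intros t. simpl. ring. Qed.

Lemma is_exp_sum_const c : is_exp_sum (fun _ => c).
Proof.
  apply (is_exp_sum_ext _ _ (is_exp_sum_exp c 0)). intros t. rewrite Rmult_0_l, exp_0. ring.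
Qed.

Lemma is_exp_sum_plus f g : is_exp_sum f -> is_exp_sum g -> is_exp_sum (fun t => f t + g t).
Proof. intros [l1 H1] [l2 H2]. exists (l1 ++ l2). intros t. now rewrite exp_sum_app, H1, H2. Qed.

Lemma is_exp_sum_mult f g : is_exp_sum f -> is_exp_sum g -> is_exp_sum (fun t => f t * g t).
Proof. intros [l1 H1] [l2 H2]. eexists. intros t. now rewrite exp_sum_mult, H1, H2. Qed.

Lemma is_exp_sum_rsum n (F : nat -> R -> R) :
  (forall k, is_exp_sum (F k)) -> is_exp_sum (fun t => rsum n (fun k => F k t)).
Proof.
  intros HF. induction n; simpl; [apply is_exp_sum_const|]. now apply is_exp_sum_plus.
Qed.

Lemma is_exp_sum_bernstein v n k : is_exp_sum v -> is_exp_sum (fun t => bernstein n k (v t)).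
Proof.
  intros Hv. revert k; induction n; intros k; simpl; [destruct k; apply is_exp_sum_const|].
  apply is_exp_sum_plus; apply is_exp_sum_mult; auto.
  - destruct k; [apply is_exp_sum_const | apply IHn].
  - apply (is_exp_sum_ext (fun t => 1 + -1 * v t)); [|intros; ring].
    apply is_exp_sum_plus; [apply is_exp_sum_const | apply is_exp_sum_mult; auto; apply is_exp_sum_const].
Qed.

Definition gauss_sum (l : list (R * R * R)) (t : R) : R :=
  fold_right (fun p acc => fst (fst p) * K ((t - snd (fst p)) / snd p) + acc) 0 l.

Definition pos_widths (l : list (R * R * R)) : Prop := Forall (fun p => 0 < snd p) l.

Definition gauss_approximable (a b : R) (h : R -> R) : Prop :=
  forall eps, 0 < eps -> exists l, pos_widths l /\
    forall t, a <= t <= b -> Rabs (h t - gauss_sum l t) <= eps.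

Lemma gauss_sum_app l1 l2 t : gauss_sum (l1 ++ l2) t = gauss_sum l1 t + gauss_sum l2 t.
Proof. induction l1; simpl; [ring|]. rewrite IHl1. ring. Qed.

Lemma gauss_approximable_zero a b : gauss_approximable a b (fun _ => 0).
Proof.
  intros eps Heps. exists nil. split; [constructor|]. intros t _. simpl. rewrite Rminus_0_r, Rabs_R0. lra.
Qed.

Lemma gauss_approximable_plus a b f g :
  gauss_approximable a b f -> gauss_approximable a b g -> gauss_approximable a b (fun t => f t + g t).
Proof.
  intros Hf Hg eps Heps.
  destruct (Hf (eps / 2)) as [l1 [P1 H1]]; [lra|]. destruct (Hg (eps / 2)) as [l2 [P2 H2]]; [lra|].
  exists (l1 ++ l2). split; [now apply Forall_app|]. intros t Ht.
  rewrite gauss_sum_app. specialize (H1 t Ht). specialize (H2 t Ht).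
  replace (f t + g t - (gauss_sum l1 t + gauss_sum l2 t))
    with ((f t - gauss_sum l1 t) + (g t - gauss_sum l2 t)) by ring.
  eapply Rle_trans; [apply Rabs_triang | lra].
Qed.

(* Completing the square: a wide Gaussian centred at [b s^2 / 2] is [exp (b t)] damped by
   [exp (-(t/s)^2)]. *)
Lemma gauss_completed_square w b s t : 0 < s ->
  w * exp (b * b * s * s / 4) * K ((t - b * s * s / 2) / s) = w * exp (b * t) * exp (- (t * t / (s * s))).
Proof. intros Hs. unfold K. rewrite !Rmult_assoc, <- !exp_plus. do 2 f_equal. field. lra. Qed.

Lemma exp_le_mono x y : x <= y -> exp x <= exp y.
Proof. intros H. destruct (Req_dec x y); [subst; lra | left; apply exp_increasing; lra]. Qed.

Lemma one_minus_exp_opp x : 0 <= x -> 0 <= 1 - exp (- x) <= x.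
Proof.
  intros Hx. pose proof (exp_ineq1_le (- x)).
  assert (exp (- x) <= exp 0) by (apply exp_le_mono; lra). rewrite exp_0 in *. lra.
Qed.

Lemma gauss_approximable_exp a b w beta : gauss_approximable a b (fun t => w * exp (beta * t)).
Proof.
  intros eps Heps.
  set (R0 := Rabs a + Rabs b).
  set (X := Rabs w * exp (Rabs beta * R0) * (R0 * R0)).
  assert (HX : 0 <= X).
  { unfold X. pose proof (Rabs_pos w). pose proof (exp_pos (Rabs beta * R0)). pose proof (Rle_0_sqr R0).
    unfold Rsqr in *. apply Rmult_le_pos; [apply Rmult_le_pos|]; lra. }
  set (s := X / eps + 1).
  assert (Hs : 1 <= s) by (pose proof (Rle_mult_inv_pos X eps HX Heps); unfold s, Rdiv; lra).
  exists ((w * exp (beta * beta * s * s / 4), beta * s * s / 2, s) :: nil).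
  split; [constructor; simpl; [lra | constructor]|]. intros t Ht. simpl.
  rewrite Rplus_0_r, gauss_completed_square by lra.
  replace (w * exp (beta * t) - w * exp (beta * t) * exp (- (t * t / (s * s))))
    with (w * exp (beta * t) * (1 - exp (- (t * t / (s * s))))) by ring.
  assert (Ht2 : 0 <= t * t / (s * s)) by (apply Rle_mult_inv_pos; nra).
  destruct (one_minus_exp_opp _ Ht2) as [O1 O2].
  rewrite !Rabs_mult, (Rabs_right (exp _)) by (left; apply exp_pos).
  rewrite (Rabs_right (1 - _)) by lra.
  assert (Habs : Rabs t <= R0) by (unfold R0, Rabs; repeat destruct Rcase_abs; lra).
  assert (Hexp : exp (beta * t) <= exp (Rabs beta * R0)).
  { apply exp_le_mono. eapply Rle_trans; [apply RRle_abs|]. rewrite Rabs_mult.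
    apply Rmult_le_compat_l; [apply Rabs_pos | exact Habs]. }
  assert (Hquad : t * t / (s * s) <= R0 * R0 / s).
  { assert (t * t <= R0 * R0).
    { pose proof (Rabs_pos t). rewrite <- (Rabs_right (t * t)) by nra. rewrite Rabs_mult. nra. }
    apply Rmult_le_reg_r with (s * s); [nra|]. field_simplify; nra. }
  apply Rle_trans with (Rabs w * exp (Rabs beta * R0) * (R0 * R0 / s)).
  { apply Rmult_le_compat; [| lra | | lra].
    - apply Rmult_le_pos; [apply Rabs_pos | left; apply exp_pos].
    - apply Rmult_le_compat_l; [apply Rabs_pos | exact Hexp]. }
  replace (Rabs w * exp (Rabs beta * R0) * (R0 * R0 / s)) with (X / s) by (unfold X; field; lra).
  apply Rmult_le_reg_r with s; [lra|]. unfold s. field_simplify; lra.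
Qed.

Lemma gauss_approximable_exp_sum a b h : is_exp_sum h -> gauss_approximable a b h.
Proof.
  intros [l Hl] eps Heps.
  assert (Hsum : gauss_approximable a b (exp_sum l)).
  { clear Hl. induction l as [|[w beta] l IH]; [apply gauss_approximable_zero|].
    apply (gauss_approximable_plus a b (fun t => w * exp (beta * t))); [apply gauss_approximable_exp | exact IH]. }
  destruct (Hsum eps Heps) as [l' [P H]]. exists l'. split; [exact P|].
  intros t Ht. rewrite Hl. now apply H.
Qed.

Lemma ln_lipschitz A x y : 0 < A -> A <= x -> A <= y -> Rabs (ln x - ln y) <= Rabs (x - y) / A.
Proof.
  assert (Hle : forall x y, A <= y -> y <= x -> 0 < A -> Rabs (ln x - ln y) <= Rabs (x - y) / A).
  { intros u v Hv Hvu HA.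
    assert (ln v <= ln u) by (destruct (Req_dec u v); [subst; lra | left; apply ln_increasing; lra]).
    rewrite !Rabs_right by lra.
    replace (ln u - ln v) with (ln (u / v))
      by (unfold Rdiv; rewrite ln_mult, ln_Rinv; try apply Rinv_0_lt_compat; lra).
    assert (ln (u / v) <= u / v - 1).
    { pose proof (exp_ineq1_le (ln (u / v))). rewrite exp_ln in *; [lra | apply Rdiv_lt_0_compat; lra]. }
    apply Rle_trans with ((u - v) / v); [replace ((u - v) / v) with (u / v - 1) by (field; lra); lra|].
    apply Rmult_le_compat_l; [lra | apply Rinv_le_contravar; lra]. }
  intros HA Hx Hy. destruct (Rle_dec y x); [now apply Hle|].
  rewrite Rabs_minus_sym, (Rabs_minus_sym x). apply Hle; lra.
Qed.

Lemma lipschitz_log_reparam g L A D y1 y2 : lipschitz L g -> 0 < A -> 0 < D -> 0 <= y1 <= 1 -> 0 <= y2 <= 1 ->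
  Rabs (g (ln (A + y1 * D)) - g (ln (A + y2 * D))) <= L * D / A * Rabs (y1 - y2).
Proof.
  intros HL HA HD Hy1 Hy2. pose proof (lipschitz_nonneg L g HL). eapply Rle_trans; [apply HL|].
  pose proof (ln_lipschitz A (A + y1 * D) (A + y2 * D) HA ltac:(nra) ltac:(nra)) as Hln.
  replace (A + y1 * D - (A + y2 * D)) with (D * (y1 - y2)) in Hln by ring.
  rewrite Rabs_mult, (Rabs_right D) in Hln by lra.
  apply Rle_trans with (L * (D * Rabs (y1 - y2) / A)); [now apply Rmult_le_compat_l|].
  right. field. lra.
Qed.

Lemma is_exp_sum_exp_affine A D : D <> 0 -> is_exp_sum (fun t => (exp t - A) / D).
Proof.
  intros HD. apply (is_exp_sum_ext (fun t => / D * exp (1 * t) + (- A / D))).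
  - apply is_exp_sum_plus; [apply is_exp_sum_exp | apply is_exp_sum_const].
  - intros t. rewrite Rmult_1_l. field. exact HD.
Qed.

(* On [a, b] put [y = (exp t - A) / D] with [A = exp a]: then [g t = u y] with [u y = g (ln (A + y D))]
   Lipschitz on [0, 1], and a Bernstein polynomial in [y] is an exponential sum in [t]. *)
Theorem lipschitz_gauss_approximable g L a b : lipschitz L g -> gauss_approximable a b g.
Proof.
  intros HL eps Heps.
  pose proof (lipschitz_nonneg L g HL) as HL0.
  set (b' := Rmax b (a + 1)).
  assert (Hb' : a + 1 <= b' /\ b <= b') by (unfold b', Rmax; destruct Rle_dec; lra).
  set (A := exp a). set (D := exp b' - A).
  assert (HA : 0 < A) by apply exp_pos.
  assert (HD : 0 < D) by (unfold D, A; pose proof (exp_increasing a b' ltac:(lra)); lra).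
  set (u := fun y => g (ln (A + y * D))).
  assert (HLu : 0 <= L * D / A) by (apply Rle_mult_inv_pos; nra).
  destruct (bernstein_approx u _ HLu (fun y1 y2 => lipschitz_log_reparam g L A D y1 y2 HL HA HD) (eps / 2))
    as [n [Hn Hb]]; [lra|].
  set (v := fun t => (exp t - A) / D).
  set (P := fun t => rsum (S n) (fun k => u (INR k / INR n) * bernstein n k (v t))).
  assert (HP : is_exp_sum P).
  { apply (is_exp_sum_rsum (S n) (fun k t => u (INR k / INR n) * bernstein n k (v t))). intros k.
    apply is_exp_sum_mult; [apply is_exp_sum_const | apply is_exp_sum_bernstein, is_exp_sum_exp_affine; lra]. }
  destruct (gauss_approximable_exp_sum a b P HP (eps / 2)) as [l [Pl Hl]]; [lra|].
  exists l. split; [exact Pl|]. intros t Ht.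
  assert (Hvt : 0 <= v t <= 1).
  { pose proof (exp_le_mono a t) as E1. pose proof (exp_le_mono t b') as E2. unfold v, D, A in *.
    split; [apply Rle_mult_inv_pos; lra|].
    apply Rmult_le_reg_r with (exp b' - exp a); [lra|]. field_simplify; lra. }
  assert (Hut : u (v t) = g t).
  { unfold u, v. replace (A + (exp t - A) / D * D) with (exp t) by (field; lra). now rewrite ln_exp. }
  specialize (Hb (v t) Hvt). rewrite Hut in Hb. specialize (Hl t Ht). unfold P in Hl.
  replace (g t - gauss_sum l t) with
    ((g t - rsum (S n) (fun k => u (INR k / INR n) * bernstein n k (v t)))
     + (rsum (S n) (fun k => u (INR k / INR n) * bernstein n k (v t)) - gauss_sum l t)) by ring.
  eapply Rle_trans; [apply Rabs_triang | lra].
Qed.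

(** * Uniform continuity on the cube *)

Definition set_coord (g : nat -> R) (j : nat) (v : R) : nat -> R :=
  fun p => if Nat.eq_dec p j then v else g p.

Section Bisection.

Variable d : nat.
Variable P : (nat -> R) -> (nat -> R) -> Prop.

Hypothesis P_split : forall lo hi j, (j < d)%nat ->
  P lo (set_coord hi j ((lo j + hi j) / 2)) -> P (set_coord lo j ((lo j + hi j) / 2)) hi -> P lo hi.

Hypothesis P_local : forall z, in_cube d z -> exists rho, 0 < rho /\
  forall lo hi, (forall p, (p < d)%nat -> lo p <= z p <= hi p /\ hi p - lo p < rho) -> P lo hi.

Definition subbox_of_width (lo hi lo' hi' : nat -> R) (w : nat -> R) : Prop :=
  forall p, (p < d)%nat -> lo p <= lo' p /\ hi' p <= hi p /\ hi' p - lo' p = w p.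

(* Halve the coordinates [p < i] one at a time, keeping a half on which [P] fails. *)
Lemma not_P_halve lo hi s : 0 <= s -> ~ P lo hi -> (forall p, (p < d)%nat -> hi p - lo p = s) ->
  exists lo' hi', ~ P lo' hi' /\ subbox_of_width lo hi lo' hi' (fun _ => s / 2).
Proof.
  intros Hs Hbad Hw.
  assert (Hi : forall i, (i <= d)%nat -> exists lo' hi', ~ P lo' hi' /\
    subbox_of_width lo hi lo' hi' (fun p => if Nat.ltb p i then s / 2 else s)).
  { induction i as [|i IH]; intros Hid.
    - exists lo, hi. split; [exact Hbad|]. intros p Hp. simpl. specialize (Hw p Hp). lra.
    - destruct IH as [lo1 [hi1 [Hbad1 Hsub1]]]; [lia|].
      set (m := (lo1 i + hi1 i) / 2).
      assert (Hhalf : forall lo2 hi2, ~ P lo2 hi2 ->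
        (lo2 = lo1 /\ hi2 = set_coord hi1 i m) \/ (lo2 = set_coord lo1 i m /\ hi2 = hi1) ->
        exists lo' hi', ~ P lo' hi' /\
          subbox_of_width lo hi lo' hi' (fun p => if Nat.ltb p (S i) then s / 2 else s)).
      { intros lo2 hi2 Hbad2 Hchoice. exists lo2, hi2. split; [exact Hbad2|].
        intros p Hp. specialize (Hsub1 p Hp). specialize (Hw p Hp). cbv beta in *.
        destruct Hchoice as [[-> ->] | [-> ->]]; unfold set_coord, m;
          destruct (Nat.ltb_spec p i); destruct (Nat.ltb_spec p (S i));
          destruct Nat.eq_dec as [<-|]; try lia; lra. }
      destruct (classic (P lo1 (set_coord hi1 i m))) as [Hl|Hl]; [|apply (Hhalf lo1 _ Hl); left; split; reflexivity].
      destruct (classic (P (set_coord lo1 i m) hi1)) as [Hr|Hr]; [|apply (Hhalf _ hi1 Hr); right; split; reflexivity].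
      exfalso. apply Hbad1, (P_split lo1 hi1 i); [lia | exact Hl | exact Hr]. }
  destruct (Hi d) as [lo' [hi' [Hbad' Hsub']]]; [lia|].
  exists lo', hi'. split; [exact Hbad'|]. intros p Hp. specialize (Hsub' p Hp).
  cbv beta in Hsub'. destruct (Nat.ltb_spec p d); [exact Hsub' | lia].
Qed.

Lemma not_P_chain : ~ P (fun _ => 0) (fun _ => 1) ->
  exists lo hi : nat -> nat -> R, lo O = (fun _ => 0) /\ hi O = (fun _ => 1) /\ forall j, ~ P (lo j) (hi j) /\
    subbox_of_width (lo j) (hi j) (lo (S j)) (hi (S j)) (fun _ => (/ 2) ^ S j).
Proof.
  intros Hbad.
  destruct (choice (fun (jb : nat * ((nat -> R) * (nat -> R))) (b' : (nat -> R) * (nat -> R)) =>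
    let '(j, (lo, hi)) := jb in ~ P lo hi -> (forall p, (p < d)%nat -> hi p - lo p = (/ 2) ^ j) ->
    ~ P (fst b') (snd b') /\ subbox_of_width lo hi (fst b') (snd b') (fun _ => (/ 2) ^ S j)))
    as [next Hnext].
  { intros [j [lo hi]].
    destruct (classic (~ P lo hi /\ forall p, (p < d)%nat -> hi p - lo p = (/ 2) ^ j)) as [[Hb Hw]|Hn].
    - destruct (not_P_halve lo hi _ (pow_le (/ 2) j ltac:(lra)) Hb Hw) as [lo' [hi' H']].
      exists (lo', hi'). intros _ _.
      simpl. replace (/ 2 * (/ 2) ^ j) with ((/ 2) ^ j / 2) by (unfold Rdiv; ring). exact H'.
    - exists (lo, hi). intros Hb Hw. exfalso. now apply Hn. }
  set (chain := fix chain j := match j with O => (fun _ : nat => 0, fun _ : nat => 1) | S j => next (j, chain j) end).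
  assert (Hinv : forall j, ~ P (fst (chain j)) (snd (chain j)) /\
    forall p, (p < d)%nat -> snd (chain j) p - fst (chain j) p = (/ 2) ^ j).
  { induction j as [|j [Hb Hw]]; [split; [exact Hbad | intros; simpl; lra]|].
    specialize (Hnext (j, chain j)). destruct (chain j) as [lo hi] eqn:E. simpl in Hnext |- *.
    destruct (Hnext Hb Hw) as [Hb' Hsub]. rewrite E. split; [exact Hb'|].
    intros p Hp. apply Hsub, Hp. }
  exists (fun j => fst (chain j)), (fun j => snd (chain j)). split; [reflexivity | split; [reflexivity|]]. intros j.
  destruct (Hinv j) as [Hb Hw]. split; [exact Hb|].
  change (chain (S j)) with (next (j, chain j)).
  specialize (Hnext (j, chain j)). destruct (chain j) as [lo hi]. exact (proj2 (Hnext Hb Hw)).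
Qed.

Theorem bisection_unit_cube : P (fun _ => 0) (fun _ => 1).
Proof.
  apply NNPP. intros Hbad. destruct (not_P_chain Hbad) as [lo [hi [Hlo0 [Hhi0 Hc]]]].
  assert (Hmono : forall j k p, (p < d)%nat -> lo j p <= lo (j + k)%nat p /\ hi (j + k)%nat p <= hi j p).
  { intros j k p Hp. induction k; [rewrite Nat.add_0_r; lra|].
    rewrite Nat.add_succ_r. destruct (Hc (j + k)%nat) as [_ Hs]. specialize (Hs p Hp). lra. }
  assert (Hwidth : forall j p, (p < d)%nat -> hi j p - lo j p = (/ 2) ^ j).
  { intros [|j] p Hp; [rewrite Hlo0, Hhi0; simpl; lra|]. now destruct (Hc j) as [_ Hs]; apply Hs. }
  assert (Hlohi : forall j k p, (p < d)%nat -> lo j p <= hi k p).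
  { intros j k p Hp. pose proof (pow_le (/ 2) j ltac:(lra)). pose proof (pow_le (/ 2) k ltac:(lra)).
    pose proof (Hwidth j p Hp). pose proof (Hwidth k p Hp). destruct (Nat.le_gt_cases j k) as [Hjk|Hkj].
    - replace k with (j + (k - j))%nat in * by lia. destruct (Hmono j (k - j)%nat p Hp). lra.
    - replace j with (k + (j - k))%nat in * by lia. destruct (Hmono k (j - k)%nat p Hp). lra. }
  (* Truncating at 1 bounds these sets also for the irrelevant coordinates [p >= d]. *)
  set (E := fun p r => exists j, r = Rmin 1 (lo j p)).
  assert (HE : forall p, bound (E p)) by (intros p; exists 1; intros r [j ->]; apply Rmin_l).
  assert (HE' : forall p, exists r, E p r) by (intros p; exists (Rmin 1 (lo O p)), O; reflexivity).
  set (z := fun p => proj1_sig (completeness _ (HE p) (HE' p))).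
  assert (Hz : forall j p, (p < d)%nat -> lo j p <= z p <= hi j p).
  { intros j p Hp. unfold z. destruct (completeness _ (HE p) (HE' p)) as [zp [Hub Hlub]]. simpl.
    assert (Hmin : forall k, Rmin 1 (lo k p) = lo k p).
    { intros k. apply Rmin_right. pose proof (Hlohi k O p Hp) as H. now rewrite Hhi0 in H. }
    split.
    - apply Hub. exists j. now rewrite Hmin.
    - apply Hlub. intros r [k ->]. rewrite Hmin. now apply Hlohi. }
  assert (Hzc : in_cube d z).
  { intros p Hp. specialize (Hz O p Hp). rewrite Hlo0, Hhi0 in Hz. exact Hz. }
  destruct (P_local z Hzc) as [rho [Hrho Hloc]].
  destruct (pow_lt_1_zero (/ 2) ltac:(rewrite Rabs_right; lra) rho Hrho) as [N HN].
  specialize (HN N (le_n N)). rewrite Rabs_right in HN by (apply Rle_ge, pow_le; lra).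
  destruct (Hc N) as [HbadN _]. apply HbadN, Hloc. intros p Hp.
  rewrite Hwidth by exact Hp. split; [now apply Hz | exact HN].
Qed.

End Bisection.

Definition unif_cont_on_cube (d : nat) (f : (nat -> R) -> R) : Prop :=
  forall e, 0 < e -> exists delta, 0 < delta /\ forall x y, in_cube d x -> in_cube d y ->
    (forall p, (p < d)%nat -> Rabs (x p - y p) <= delta) -> Rabs (f x - f y) <= e.

Lemma Rabs_close_in_box lo hi z x rho :
  lo <= z <= hi -> lo <= x <= hi -> hi - lo < rho -> Rabs (x - z) < rho.
Proof. intros. unfold Rabs. destruct Rcase_abs; lra. Qed.

Theorem cont_on_cube_unif d f : cont_on_cube d f -> unif_cont_on_cube d f.
Proof.
  intros Hf e He.
  set (P := fun lo hi : nat -> R => exists delta, 0 < delta /\ forall x y, in_cube d x -> in_cube d y ->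
    (forall p, (p < d)%nat -> lo p <= x p <= hi p) ->
    (forall p, (p < d)%nat -> Rabs (x p - y p) < delta) -> Rabs (f x - f y) < e).
  assert (HP : P (fun _ => 0) (fun _ => 1)).
  { apply (bisection_unit_cube d).
    - intros lo hi j Hj [d1 [Hd1 H1]] [d2 [Hd2 H2]]. exists (Rmin d1 d2). split; [now apply Rmin_glb_lt|].
      intros x y Hx Hy Hbox Hxy. pose proof (Rmin_l d1 d2). pose proof (Rmin_r d1 d2).
      destruct (Rle_dec (x j) ((lo j + hi j) / 2)); [apply H1 | apply H2]; auto;
        try (intros p Hp; specialize (Hxy p Hp); lra);
        intros p Hp; specialize (Hbox p Hp); unfold set_coord;
        destruct Nat.eq_dec as [->|]; lra.
    - intros z Hz. destruct (Hf z Hz (e / 2)) as [dz [Hdz Hcont]]; [lra|].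
      exists (dz / 2). split; [lra|]. intros lo hi Hbox. exists (dz / 2). split; [lra|].
      intros x y Hx Hy Hxbox Hxy.
      assert (Hxz : forall p, (p < d)%nat -> Rabs (x p - z p) < dz / 2).
      { intros p Hp. destruct (Hbox p Hp) as [Hzp Hw]. apply (Rabs_close_in_box (lo p) (hi p)); auto. }
      assert (A1 : Rabs (f x - f z) < e / 2) by (apply Hcont; auto; intros p Hp; specialize (Hxz p Hp); lra).
      assert (A2 : Rabs (f y - f z) < e / 2).
      { apply Hcont; auto. intros p Hp. specialize (Hxz p Hp). specialize (Hxy p Hp).
        unfold Rabs in *. repeat destruct Rcase_abs; lra. }
      replace (f x - f y) with ((f x - f z) - (f y - f z)) by ring.
      unfold Rabs in *. repeat destruct Rcase_abs; lra. }
  destruct HP as [delta [Hdelta H]]. exists (delta / 2). split; [lra|].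
  intros x y Hx Hy Hxy. left. apply H; auto. intros p Hp. specialize (Hxy p Hp). lra.
Qed.

Theorem cont_on_cube_bounded d f : cont_on_cube d f -> exists B, forall x, in_cube d x -> Rabs (f x) <= B.
Proof.
  intros Hf.
  set (P := fun lo hi : nat -> R => exists B, forall x, in_cube d x ->
    (forall p, (p < d)%nat -> lo p <= x p <= hi p) -> Rabs (f x) <= B).
  assert (HP : P (fun _ => 0) (fun _ => 1)).
  { apply (bisection_unit_cube d).
    - intros lo hi j Hj [B1 H1] [B2 H2]. exists (Rmax B1 B2). intros x Hx Hbox.
      pose proof (Rmax_l B1 B2). pose proof (Rmax_r B1 B2).
      destruct (Rle_dec (x j) ((lo j + hi j) / 2)); [eapply Rle_trans; [apply H1|]|eapply Rle_trans; [apply H2|]];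
        auto; intros p Hp; specialize (Hbox p Hp); unfold set_coord; destruct Nat.eq_dec as [->|]; lra.
    - intros z Hz. destruct (Hf z Hz 1) as [dz [Hdz Hcont]]; [lra|].
      exists dz. split; [exact Hdz|]. intros lo hi Hbox. exists (Rabs (f z) + 1). intros x Hx Hxbox.
      assert (Rabs (f x - f z) < 1).
      { apply Hcont; auto. intros p Hp. destruct (Hbox p Hp) as [Hzp Hw].
        apply (Rabs_close_in_box (lo p) (hi p)); auto. }
      replace (f x) with ((f x - f z) + f z) by ring. eapply Rle_trans; [apply Rabs_triang | lra]. }
  destruct HP as [B HB]. exists B. intros x Hx. now apply HB.
Qed.

(** * Shifted grids *)

Definition nq (d : nat) : nat := (2 * d + 1)%nat.

Lemma IZR_abs_ge1 z : z <> 0%Z -> 1 <= Rabs (IZR z).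
Proof. intros Hz. rewrite <- abs_IZR. apply IZR_le. lia. Qed.

Section Grids.

Variables d N : nat.
Hypothesis Hd : (1 <= d)%nat.
Hypothesis HN : (1 <= N)%nat.

(* Grid [q] consists of the cells [node q k - cell, node q k]; consecutive grids are shifted by
   [cell / nq d], and each node is preceded by a ramp of width [ramp] on which the
   refined inner functions interpolate linearly between their plateaus. *)
Definition cell : R := / INR N.
Definition ramp : R := cell / (2 * INR (nq d)).
Definition node (q k : nat) : R := (INR k + INR q / INR (nq d)) * cell.

Definition on_ramp (q : nat) (t : R) : Prop := exists k, (k <= N)%nat /\ node q k - ramp <= t <= node q k.

Lemma nq_ge3 : 3 <= INR (nq d).
Proof. unfold nq. rewrite plus_INR, mult_INR. simpl. pose proof (le_INR 1 d Hd). simpl in *. lra. Qed.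

Lemma cell_pos : 0 < cell.
Proof using HN. unfold cell. apply Rinv_0_lt_compat, lt_0_INR. exact HN. Qed.

Lemma ramp_pos : 0 < ramp /\ ramp < cell.
Proof.
  pose proof nq_ge3. pose proof cell_pos. unfold ramp.
  split; [apply Rdiv_lt_0_compat; lra|]. apply Rmult_lt_reg_r with (2 * INR (nq d)); [lra|].
  field_simplify; nra.
Qed.

Lemma node_succ q k : node q (S k) = node q k + cell.
Proof. unfold node. rewrite S_INR. ring. Qed.

Lemma node_le q k k' : (k < k')%nat -> node q k + cell <= node q k'.
Proof.
  intros Hk. unfold node. pose proof cell_pos. pose proof (le_INR (S k) k' Hk). rewrite S_INR in *. nra.
Qed.

Lemma node_first q : (q < nq d)%nat -> 0 <= node q 0 < cell.
Proof.
  intros Hq. unfold node. pose proof nq_ge3. pose proof cell_pos.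
  pose proof (lt_INR q (nq d) Hq). pose proof (pos_INR q).
  assert (0 <= INR q / INR (nq d) < 1).
  { split; [apply Rle_mult_inv_pos; lra|]. apply Rmult_lt_reg_r with (INR (nq d)); [lra|]. field_simplify; lra. }
  simpl. split; nra.
Qed.

Lemma node_last q : 1 <= node q N.
Proof.
  unfold node, cell. pose proof nq_ge3. assert (0 < INR N) by (apply lt_0_INR; lia).
  assert (0 <= INR q / INR (nq d) * / INR N)
    by (apply Rle_mult_inv_pos; [apply Rle_mult_inv_pos; [apply pos_INR|]|]; lra).
  rewrite Rmult_plus_distr_r, Rinv_r; lra.
Qed.

Lemma node_cover q t : (q < nq d)%nat -> 0 <= t <= 1 ->
  exists k, (k <= N)%nat /\ node q k - cell <= t <= node q k.
Proof.
  intros Hq Ht.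
  assert (Hn : forall n, t <= node q n -> exists k, (k <= n)%nat /\ node q k - cell <= t <= node q k).
  { induction n as [|n IH]; intros Htn; [exists O; split; [lia | pose proof (node_first q Hq); lra]|].
    destruct (Rle_dec t (node q n)) as [Hle|Hgt].
    - destruct (IH Hle) as [k [Hk Ht']]. exists k. split; [lia | exact Ht'].
    - exists (S n). rewrite node_succ in *. split; [lia | lra]. }
  apply Hn. pose proof (node_last q). lra.
Qed.

Definition ramp_weight (q k : nat) (t : R) : R := clamp ((t - node q k + ramp) / ramp).

Lemma ramp_weight_1 q k t : node q k <= t -> ramp_weight q k t = 1.
Proof.
  intros Ht. pose proof ramp_pos as [Hr _]. apply clamp_1.
  apply Rmult_le_reg_r with ramp; [exact Hr|]. field_simplify; lra.
Qed.

Lemma ramp_weight_0 q k t : t <= node q k - ramp -> ramp_weight q k t = 0.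
Proof.
  intros Ht. pose proof ramp_pos as [Hr _]. apply clamp_0.
  apply Rmult_le_reg_r with ramp; [exact Hr|]. field_simplify; lra.
Qed.

Lemma ramp_weight_lipschitz q k : lipschitz (/ ramp) (ramp_weight q k).
Proof.
  pose proof ramp_pos as [Hr _]. intros a b. unfold ramp_weight.
  replace ((a - node q k + ramp) / ramp) with (/ ramp * a + (ramp - node q k) / ramp) by (field; lra).
  replace ((b - node q k + ramp) / ramp) with (/ ramp * b + (ramp - node q k) / ramp) by (field; lra).
  eapply Rle_trans; [apply (lipschitz_affine 1 clamp (/ ramp) _ lipschitz_clamp)|].
  rewrite Rabs_right by (left; now apply Rinv_0_lt_compat). lra.
Qed.

(* Nodes of different grids are at least [cell / nq d > ramp] apart, so the ramps are disjoint. *)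
Lemma on_ramp_unique q q' t : (q < nq d)%nat -> (q' < nq d)%nat -> on_ramp q t -> on_ramp q' t -> q = q'.
Proof.
  intros Hq Hq' [k [Hk Ht]] [k' [Hk' Ht']].
  set (z := (Z.of_nat (nq d) * (Z.of_nat k - Z.of_nat k') + (Z.of_nat q - Z.of_nat q'))%Z).
  pose proof nq_ge3. pose proof cell_pos. pose proof ramp_pos.
  assert (Ez : node q k - node q' k' = IZR z * (cell / INR (nq d))).
  { unfold z, node. rewrite plus_IZR, mult_IZR, !minus_IZR, <- !INR_IZR_INZ. field. lra. }
  assert (Hclose : Rabs (node q k - node q' k') <= ramp) by (unfold Rabs; destruct Rcase_abs; lra).
  assert (Hz : z = 0%Z).
  { destruct (Z.eq_dec z 0) as [|Hz]; [assumption|exfalso].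
    pose proof (IZR_abs_ge1 z Hz). rewrite Ez, Rabs_mult, (Rabs_right (cell / INR (nq d))) in Hclose
      by (apply Rle_ge, Rle_mult_inv_pos; lra).
    assert (cell / INR (nq d) <= Rabs (IZR z) * (cell / INR (nq d)))
      by (rewrite <- (Rmult_1_l (cell / INR (nq d))) at 1; apply Rmult_le_compat_r; [apply Rle_mult_inv_pos|]; lra).
    unfold ramp in *. assert (cell / (2 * INR (nq d)) < cell / INR (nq d)).
    { apply Rmult_lt_compat_l; [lra|]. apply Rinv_lt_contravar; nra. }
    lra. }
  unfold z, nq in Hz. unfold nq in Hq, Hq'.
  destruct (Nat.lt_trichotomy k k') as [Hlt|[->|Hgt]]; nia.
Qed.

End Grids.

Fixpoint zsum (n : nat) (F : nat -> Z) : Z :=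
  match n with O => 0%Z | S k => (zsum k F + F k)%Z end.

Lemma rsum_IZR n F : rsum n (fun p => IZR (F p)) = IZR (zsum n F).
Proof. induction n; simpl; [reflexivity|]. now rewrite IHn, plus_IZR. Qed.

Lemma zsum_digits_range n B (k : nat -> Z) : (1 <= B)%Z ->
  (forall p, (p < n)%nat -> 0 <= k p < B)%Z ->
  (0 <= zsum n (fun p => k p * B ^ Z.of_nat p) < B ^ Z.of_nat n)%Z.
Proof.
  intros HB Hk. induction n as [|n IH]; cbn [zsum]; [simpl; lia|].
  rewrite Nat2Z.inj_succ, Z.pow_succ_r by lia.
  pose proof (Z.pow_pos_nonneg B (Z.of_nat n) ltac:(lia) ltac:(lia)).
  specialize (IH ltac:(intros p Hp; apply Hk; lia)). specialize (Hk n ltac:(lia)). nia.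
Qed.

Lemma zsum_digits_inj n B (k k' : nat -> Z) : (1 <= B)%Z ->
  (forall p, (p < n)%nat -> 0 <= k p < B)%Z -> (forall p, (p < n)%nat -> 0 <= k' p < B)%Z ->
  zsum n (fun p => k p * B ^ Z.of_nat p)%Z = zsum n (fun p => k' p * B ^ Z.of_nat p)%Z ->
  forall p, (p < n)%nat -> k p = k' p.
Proof.
  intros HB Hk Hk'. induction n as [|n IH]; intros E p Hp; [lia|]. cbn [zsum] in E.
  pose proof (zsum_digits_range n B k HB ltac:(intros; apply Hk; lia)).
  pose proof (zsum_digits_range n B k' HB ltac:(intros; apply Hk'; lia)).
  pose proof (Hk n ltac:(lia)). pose proof (Hk' n ltac:(lia)).
  pose proof (Z.pow_pos_nonneg B (Z.of_nat n) ltac:(lia) ltac:(lia)).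
  assert (Etop : k n = k' n) by (destruct (Z.lt_trichotomy (k n) (k' n)) as [|[|]]; nia).
  destruct (Nat.eq_dec p n) as [->|Hpn]; [exact Etop|].
  apply IH; try (intros; first [apply Hk | apply Hk']; lia); [|lia].
  rewrite Etop in E. lia.
Qed.

Definition indicator (P : Prop) : R := if excluded_middle_informative P then 1 else 0.

Lemma indicator_range P : 0 <= indicator P <= 1.
Proof. unfold indicator. destruct excluded_middle_informative; lra. Qed.

(* The contraction step: [rho] is split evenly over [d + 1] of the [2 d + 1] summands, while at
   most [d] summands are "bad" (only bounded by [B / (d + 1)]). *)
Lemma split_sum_estimate d (u bad : nat -> R) rho B e : 0 <= e ->
  (forall q, (q < nq d)%nat -> bad q = 0 \/ bad q = 1) -> rsum (nq d) bad <= INR d -> Rabs rho <= B ->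
  (forall q, (q < nq d)%nat ->
    Rabs (u q - (1 - bad q) * (rho / INR (S d))) <= ((1 - bad q) * e + bad q * B) / INR (S d)) ->
  Rabs (rho - rsum (nq d) u) <= INR d / INR (S d) * B + 2 * e.
Proof.
  intros He Hbad Hnb Hrho Hu.
  assert (HSd : 0 < INR (S d)) by (apply lt_0_INR; lia).
  set (nb := rsum (nq d) bad) in *.
  assert (Hnb0 : 0 <= nb) by (apply rsum_nonneg; intros q Hq; destruct (Hbad q Hq); lra).
  assert (HQ : INR (nq d) = 2 * INR d + 1) by (unfold nq; rewrite plus_INR, mult_INR; simpl; ring).
  assert (E1 : rsum (nq d) (fun q => (1 - bad q) * (rho / INR (S d))) = (INR (nq d) - nb) * (rho / INR (S d))).
  { rewrite (rsum_ext _ _ (fun q => rho / INR (S d) * 1 - rho / INR (S d) * bad q)) by (intros; ring).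
    rewrite rsum_minus, !rsum_scal, rsum_const. fold nb. ring. }
  assert (E2 : rsum (nq d) (fun q => ((1 - bad q) * e + bad q * B) / INR (S d))
               = ((INR (nq d) - nb) * e + nb * B) / INR (S d)).
  { rewrite (rsum_ext _ _ (fun q => e / INR (S d) * 1 + (B - e) / INR (S d) * bad q)) by (intros; field; lra).
    rewrite rsum_plus, !rsum_scal, rsum_const. fold nb. field. lra. }
  assert (A1 : Rabs (rsum (nq d) (fun q => u q - (1 - bad q) * (rho / INR (S d))))
               <= ((INR (nq d) - nb) * e + nb * B) / INR (S d))
    by (rewrite <- E2; eapply Rle_trans; [apply rsum_abs | apply rsum_le; exact Hu]).
  assert (A2 : Rabs (rho - (INR (nq d) - nb) * (rho / INR (S d))) <= B * ((INR d - nb) / INR (S d))).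
  { replace (rho - (INR (nq d) - nb) * (rho / INR (S d))) with (- (rho * ((INR d - nb) / INR (S d))))
      by (rewrite HQ; rewrite S_INR in *; field; lra).
    rewrite Rabs_Ropp, Rabs_mult, (Rabs_right ((INR d - nb) / INR (S d)))
      by (apply Rle_ge, Rle_mult_inv_pos; lra).
    apply Rmult_le_compat_r; [apply Rle_mult_inv_pos|]; lra. }
  replace (rho - rsum (nq d) u) with ((rho - (INR (nq d) - nb) * (rho / INR (S d)))
    - rsum (nq d) (fun q => u q - (1 - bad q) * (rho / INR (S d)))) by (rewrite rsum_minus, E1; ring).
  eapply Rle_trans; [apply Rabs_triang|]. rewrite Rabs_Ropp.
  assert (A3 : (INR (nq d) - nb) / INR (S d) * e <= 2 * e).
  { apply Rmult_le_compat_r; [lra|]. apply Rmult_le_reg_r with (INR (S d)); [lra|].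
    rewrite HQ, S_INR in *. field_simplify; lra. }
  assert (E3 : B * ((INR d - nb) / INR (S d)) + ((INR (nq d) - nb) * e + nb * B) / INR (S d)
    = INR d / INR (S d) * B + (INR (nq d) - nb) / INR (S d) * e) by (field; lra).
  lra.
Qed.

(** * Refining an approximate Kolmogorov-Arnold representation *)

Definition inner_family (d : nat) (phi : nat -> nat -> R -> R) (L C : R) : Prop :=
  forall p q, (p < d)%nat -> (q < nq d)%nat ->
    lipschitz L (phi p q) /\ forall t, 0 <= t <= 1 -> Rabs (phi p q t) <= C.

Lemma inner_family_lipschitz_nonneg d phi L C : (1 <= d)%nat -> inner_family d phi L C -> 0 <= L.
Proof.
  intros Hd Hphi. destruct (Hphi O O) as [Lp _]; [lia | unfold nq; lia|]. exact (lipschitz_nonneg _ _ Lp).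
Qed.

Section Refinement.

Variables d N : nat.
Hypothesis Hd : (1 <= d)%nat.
Hypothesis HN : (1 <= N)%nat.
Variable T : R.
Hypothesis HT : 0 < T.
Variable phi : nat -> nat -> R -> R.
Variables L C : R.
Hypothesis HL : 0 <= L.
Hypothesis Hphi : inner_family d phi L C.

(* Cell indices [k <= N + 1] are digits in base [N + 2]: on cell [k] of grid [q] the refined inner
   function of coordinate [p] equals [T (k base^p + code_mod m)], where [T code_mod m] approximates
   [phi p q] from above; off the ramps the inner sum is thus [T] times an integer whose residue mod
   [code_mod] recovers the cells of all coordinates. *)
Definition base : Z := Z.of_nat (N + 2).
Definition code_mod : Z := (base ^ Z.of_nat d)%Z.

Definition node_pt (q k : nat) : R := Rmin 1 (node d N q k).
Definition level (p q k : nat) : Z := up (phi p q (node_pt q k) / (T * IZR code_mod)).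
Definition digit (p k : nat) : Z := (Z.of_nat k * base ^ Z.of_nat p)%Z.
Definition plateau (p q k : nat) : R := T * IZR (code_mod * level p q k + digit p k).

Definition refined_inner (p q : nat) (t : R) : R :=
  plateau p q 0 + rsum (S N) (fun k =>
    (plateau p q (S k) - plateau p q k) * ramp_weight d N q k t).

Definition refined_inner_err : R := 2 * T * IZR code_mod + 2 * L * cell N.

Lemma code_mod_ge1 : (1 <= code_mod)%Z.
Proof.
  unfold code_mod, base. pose proof (Z.pow_le_mono_l 1 (Z.of_nat (N + 2)) (Z.of_nat d)).
  rewrite Z.pow_1_l in *; lia.
Qed.

Lemma digit_range p k : (p < d)%nat -> (k <= S N)%nat -> (0 <= digit p k < code_mod)%Z.
Proof.
  intros Hp Hk. unfold digit, code_mod, base.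
  assert (H1 : (Z.of_nat (N + 2) ^ Z.of_nat (S p) <= Z.of_nat (N + 2) ^ Z.of_nat d)%Z)
    by (apply Z.pow_le_mono_r; lia).
  rewrite Nat2Z.inj_succ, Z.pow_succ_r in H1 by lia.
  pose proof (Z.pow_pos_nonneg (Z.of_nat (N + 2)) (Z.of_nat p) ltac:(lia) ltac:(lia)). nia.
Qed.

Lemma node_pt_close q k t : 0 <= t <= 1 -> Rabs (node_pt q k - t) <= Rabs (node d N q k - t).
Proof. intros Ht. unfold node_pt, Rmin. destruct Rle_dec; [unfold Rabs; repeat destruct Rcase_abs; lra | lra]. Qed.

Lemma node_pt_range q k : (q < nq d)%nat -> 0 <= node_pt q k <= 1.
Proof.
  intros Hq. pose proof (node_first d N Hd HN q Hq). pose proof (cell_pos N HN).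
  assert (node d N q 0 <= node d N q k).
  { destruct k; [lra|]. pose proof (node_le d N HN q 0 (S k) ltac:(lia)). lra. }
  unfold node_pt, Rmin. destruct Rle_dec; lra.
Qed.

Lemma plateau_above p q k : (p < d)%nat -> (k <= S N)%nat ->
  0 <= plateau p q k - phi p q (node_pt q k) <= 2 * T * IZR code_mod.
Proof.
  intros Hp Hk. pose proof (IZR_le _ _ code_mod_ge1) as HKb. pose proof (digit_range p k Hp Hk) as [D0 D1].
  apply IZR_le in D0. apply IZR_lt in D1.
  set (X := phi p q (node_pt q k)). unfold plateau, level. fold X.
  destruct (archimed (X / (T * IZR code_mod))) as [A1 A2].
  assert (E : T * IZR code_mod * (X / (T * IZR code_mod)) = X) by (field; nra).
  rewrite plus_IZR, mult_IZR.
  assert (T * IZR code_mod * (X / (T * IZR code_mod)) < T * IZR code_mod * IZR (up (X / (T * IZR code_mod))))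
    by (apply Rmult_lt_compat_l; nra).
  assert (T * IZR code_mod * IZR (up (X / (T * IZR code_mod)))
    <= T * IZR code_mod * (X / (T * IZR code_mod)) + T * IZR code_mod) by nra.
  split; nra.
Qed.

Lemma refined_inner_on_cell p q t k : (k <= N)%nat -> node d N q k - cell N <= t <= node d N q k ->
  refined_inner p q t = plateau p q k + (plateau p q (S k) - plateau p q k) * ramp_weight d N q k t.
Proof.
  intros Hk Ht. pose proof (ramp_pos d N Hd HN). unfold refined_inner.
  replace (S N) with (k + S (N - k))%nat by lia. rewrite rsum_split, rsum_succ_l, Nat.add_0_r.
  rewrite (rsum_ext k _ (fun j => plateau p q (S j) - plateau p q j)), rsum_telescope.
  - rewrite (rsum_ext (N - k) _ (fun _ => 0)), rsum_const; [ring|].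
    intros j Hj. rewrite (ramp_weight_0 d N Hd HN); [ring|].
    pose proof (node_le d N HN q k (k + S j) ltac:(lia)). lra.
  - intros j Hj. rewrite (ramp_weight_1 d N Hd HN); [ring|].
    pose proof (node_le d N HN q j k Hj). lra.
Qed.

Lemma refined_inner_off_ramp p q t k : (k <= N)%nat -> node d N q k - cell N <= t <= node d N q k ->
  ~ on_ramp d N q t ->
  refined_inner p q t = plateau p q k.
Proof.
  intros Hk Ht Hoff. rewrite (refined_inner_on_cell p q t k Hk Ht), (ramp_weight_0 d N Hd HN); [ring|].
  destruct (Rle_dec t (node d N q k - ramp d N)) as [|Hgt]; [assumption|].
  exfalso. apply Hoff. exists k. split; [exact Hk | lra].
Qed.

Lemma refined_inner_close p q t : (p < d)%nat -> (q < nq d)%nat -> 0 <= t <= 1 ->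
  Rabs (refined_inner p q t - phi p q t) <= refined_inner_err.
Proof.
  intros Hp Hq Ht. destruct (node_cover d N Hd HN q t Hq Ht) as [k [Hk Hkt]].
  rewrite (refined_inner_on_cell p q t k Hk Hkt). destruct (Hphi p q Hp Hq) as [Lp _].
  pose proof (cell_pos N HN).
  set (lam := ramp_weight d N q k t).
  assert (Hlam : 0 <= lam <= 1) by apply clamp_range.
  assert (Hplateau : forall j, (k <= j <= S k)%nat -> Rabs (plateau p q j - phi p q t) <= refined_inner_err).
  { intros j Hj. pose proof (plateau_above p q j Hp ltac:(lia)). pose proof (Lp (node_pt q j) t).
    pose proof (node_pt_close q j t Ht).
    assert (Rabs (node d N q j - t) <= 2 * cell N).
    { destruct (Nat.eq_dec j k) as [->|]; [|replace j with (S k) by lia; rewrite node_succ];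
        unfold Rabs; destruct Rcase_abs; lra. }
    unfold refined_inner_err.
    replace (plateau p q j - phi p q t)
      with ((plateau p q j - phi p q (node_pt q j)) + (phi p q (node_pt q j) - phi p q t)) by ring.
    eapply Rle_trans; [apply Rabs_triang|]. rewrite Rabs_right by lra. nra. }
  pose proof (Hplateau k ltac:(lia)). pose proof (Hplateau (S k) ltac:(lia)).
  replace (plateau p q k + (plateau p q (S k) - plateau p q k) * lam - phi p q t)
    with ((1 - lam) * (plateau p q k - phi p q t) + lam * (plateau p q (S k) - phi p q t)) by ring.
  eapply Rle_trans; [apply Rabs_triang|].
  rewrite !Rabs_mult, (Rabs_right lam), (Rabs_right (1 - lam)) by lra. nra.
Qed.

Lemma refined_inner_bound p q t : (p < d)%nat -> (q < nq d)%nat -> 0 <= t <= 1 ->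
  Rabs (refined_inner p q t) <= C + refined_inner_err.
Proof.
  intros Hp Hq Ht. pose proof (refined_inner_close p q t Hp Hq Ht). destruct (Hphi p q Hp Hq) as [_ Hb].
  specialize (Hb t Ht). replace (refined_inner p q t) with ((refined_inner p q t - phi p q t) + phi p q t) by ring.
  eapply Rle_trans; [apply Rabs_triang | lra].
Qed.

Lemma plateau_bound p q k : (p < d)%nat -> (q < nq d)%nat -> (k <= S N)%nat ->
  Rabs (plateau p q k) <= C + 2 * T * IZR code_mod.
Proof.
  intros Hp Hq Hk. pose proof (plateau_above p q k Hp Hk). destruct (Hphi p q Hp Hq) as [_ Hb].
  specialize (Hb (node_pt q k) (node_pt_range q k Hq)). unfold Rabs in *; repeat destruct Rcase_abs; lra.
Qed.

Lemma refined_inner_lipschitz p q : (p < d)%nat -> (q < nq d)%nat ->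
  lipschitz (INR (S N) * (2 * (C + 2 * T * IZR code_mod) / ramp d N)) (refined_inner p q).
Proof.
  intros Hp Hq. pose proof (ramp_pos d N Hd HN) as [Hr _]. unfold refined_inner.
  rewrite <- (Rplus_0_l (INR (S N) * _)).
  apply (lipschitz_plus 0 _ (fun _ => plateau p q 0)); [apply lipschitz_const|].
  apply (lipschitz_rsum (S N) _ (fun k t => (plateau p q (S k) - plateau p q k) * ramp_weight d N q k t)).
  intros k Hk. eapply lipschitz_le; [apply lipschitz_scal, ramp_weight_lipschitz; assumption|].
  unfold Rdiv. apply Rmult_le_compat_r; [left; now apply Rinv_0_lt_compat|].
  pose proof (plateau_bound p q (S k) Hp Hq ltac:(lia)). pose proof (plateau_bound p q k Hp Hq ltac:(lia)).
  unfold Rminus. eapply Rle_trans; [apply Rabs_triang|]. rewrite Rabs_Ropp. lra.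
Qed.

Definition inner_sum (q : nat) (x : nat -> R) : R := rsum d (fun p => refined_inner p q (x p)).

Definition box_code (q : nat) (kp : nat -> nat) : Z :=
  zsum d (fun p => code_mod * level p q (kp p) + digit p (kp p))%Z.

Definition off_ramps (q : nat) (x : nat -> R) : Prop := forall p, (p < d)%nat -> ~ on_ramp d N q (x p).

Definition in_cell (q : nat) (kp : nat -> nat) (x : nat -> R) : Prop :=
  forall p, (p < d)%nat -> (kp p <= N)%nat /\ node d N q (kp p) - cell N <= x p <= node d N q (kp p).

Lemma inner_sum_off_ramps q x : (q < nq d)%nat -> in_cube d x -> off_ramps q x ->
  exists kp, in_cell q kp x /\ inner_sum q x = T * IZR (box_code q kp).
Proof.
  intros Hq Hx Hoff.
  destruct (choice (fun p k => (p < d)%nat -> (k <= N)%nat /\ node d N q k - cell N <= x p <= node d N q k))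
    as [kp Hkp].
  { intros p. destruct (Nat.lt_ge_cases p d) as [Hp|Hp].
    - destruct (node_cover d N Hd HN q (x p) Hq (Hx p Hp)) as [k Hk]. now exists k.
    - exists O. lia. }
  exists kp. split; [exact Hkp|]. unfold inner_sum, box_code.
  rewrite <- rsum_IZR, <- rsum_scal. apply rsum_ext. intros p Hp.
  destruct (Hkp p Hp) as [Hk Hkx]. now rewrite (refined_inner_off_ramp p q (x p) (kp p) Hk Hkx (Hoff p Hp)).
Qed.

Lemma zsum_linear n c (a b : nat -> Z) : zsum n (fun p => c * a p + b p)%Z = (c * zsum n a + zsum n b)%Z.
Proof. induction n; simpl; [ring|]. rewrite IHn. ring. Qed.

Lemma box_code_inj q kp kp' : (forall p, (p < d)%nat -> kp p <= N)%nat -> (forall p, (p < d)%nat -> kp' p <= N)%nat ->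
  box_code q kp = box_code q kp' -> forall p, (p < d)%nat -> kp p = kp' p.
Proof.
  intros Hkp Hkp' E. unfold box_code, digit in E. rewrite !zsum_linear in E.
  pose proof code_mod_ge1.
  assert (Hdig : forall k : nat -> nat, (forall p, (p < d)%nat -> k p <= N)%nat ->
    (0 <= zsum d (fun p => Z.of_nat (k p) * base ^ Z.of_nat p) < code_mod)%Z).
  { intros k Hk. apply zsum_digits_range; [unfold base; lia|]. intros p Hp. specialize (Hk p Hp). unfold base. lia. }
  pose proof (Hdig kp Hkp). pose proof (Hdig kp' Hkp').
  set (M := zsum d (fun p => level p q (kp p))) in E. set (M' := zsum d (fun p => level p q (kp' p))) in E.
  assert (HM : M = M') by (destruct (Z.lt_trichotomy M M') as [|[|]]; nia).
  rewrite HM in E. apply Z.add_reg_l in E.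
  intros p Hp. apply Nat2Z.inj.
  apply (zsum_digits_inj d base (fun p => Z.of_nat (kp p)) (fun p => Z.of_nat (kp' p))); [| | | exact E | exact Hp].
  - unfold base. lia.
  - intros p' Hp'. specialize (Hkp p' Hp'). unfold base. lia.
  - intros p' Hp'. specialize (Hkp' p' Hp'). unfold base. lia.
Qed.

Lemma inner_sum_bound q x : (q < nq d)%nat -> in_cube d x -> Rabs (inner_sum q x) <= INR d * (C + refined_inner_err).
Proof. intros Hq Hx. apply rsum_abs_le. intros p Hp. now apply refined_inner_bound, Hx. Qed.

Lemma count_not_off_ramps x : rsum (nq d) (fun q => indicator (~ off_ramps q x)) <= INR d.
Proof.
  apply Rle_trans with (rsum (nq d) (fun q => rsum d (fun p => indicator (on_ramp d N q (x p))))).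
  - apply rsum_le. intros q Hq. unfold indicator at 1. destruct excluded_middle_informative as [Hbad|].
    + apply not_all_ex_not in Hbad as [p Hp]. apply imply_to_and in Hp as [Hp Hon]. apply NNPP in Hon.
      eapply Rle_trans; [|apply (rsum_term_le d _ p); [intros; apply indicator_range | exact Hp]].
      unfold indicator. destruct excluded_middle_informative; [lra | contradiction].
    + apply rsum_nonneg. intros. apply indicator_range.
  - rewrite rsum_swap, <- (Rmult_1_r (INR d)), <- rsum_const. apply rsum_le. intros p Hp.
    eapply Rle_trans; [apply RRle_abs|]. apply Rabs_rsum_one_nonzero; [| |lra].
    + intros q _. pose proof (indicator_range (on_ramp d N q (x p))). rewrite Rabs_right; lra.
    + intros i j Hi Hj. unfold indicator.
      do 2 (destruct excluded_middle_informative; [|intros; lra]). intros _ _.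
      now apply (on_ramp_unique d N Hd HN i j (x p)).
Qed.

Section Outer.

Variable r : (nat -> R) -> R.
Variables B e : R.
Hypothesis HB : forall x, in_cube d x -> Rabs (r x) <= B.
Hypothesis Hr : forall x y, in_cube d x -> in_cube d y ->
  (forall p, (p < d)%nat -> Rabs (x p - y p) <= cell N) -> Rabs (r x - r y) <= e.

Lemma B_nonneg : 0 <= B.
Proof.
  assert (H0 : in_cube d (fun _ => 0)) by (intros p _; lra).
  pose proof (HB _ H0). pose proof (Rabs_pos (r (fun _ => 0))). lra.
Qed.

(* The outer function interpolates, at the lattice points [T z], the value [r / (d + 1)] at some
   point off the ramps whose inner sum is [T z]; the truncation to [[-B, B]] only matters
   for lattice points that are not such inner sums. *)
Definition code_range : nat := Z.to_nat (up (INR d * (C + refined_inner_err) / T)).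
Definition lattice (i : nat) : Z := (Z.of_nat i - Z.of_nat code_range)%Z.
Definition truncate (y : R) : R := Rmax (- B) (Rmin B y).

Definition outer_value (q : nat) (z : Z) : R :=
  truncate (r (epsilon (inhabits (fun _ => 0))
    (fun x => in_cube d x /\ off_ramps q x /\ inner_sum q x = T * IZR z))) / INR (S d).

Definition bump (u : R) : R := clamp (2 - 4 * Rabs u).

Definition outer_correction (q : nat) (y : R) : R :=
  rsum (S (2 * code_range)) (fun i => outer_value q (lattice i) * bump (y / T - IZR (lattice i))).

Lemma bump_far u : 1 / 2 <= Rabs u -> bump u = 0.
Proof. intros Hu. apply clamp_0. lra. Qed.

Lemma bump_lipschitz : lipschitz 4 bump.
Proof.
  intros a b. unfold bump. eapply Rle_trans; [apply lipschitz_clamp|]. rewrite Rmult_1_l.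
  replace (2 - 4 * Rabs a - (2 - 4 * Rabs b)) with (-4 * (Rabs a - Rabs b)) by ring.
  rewrite Rabs_mult. replace (Rabs (-4)) with 4 by (rewrite Rabs_left; lra).
  apply Rmult_le_compat_l; [lra | apply Rabs_triang_inv2].
Qed.

Lemma outer_value_bound q z : Rabs (outer_value q z) <= B / INR (S d).
Proof.
  pose proof B_nonneg. assert (0 < INR (S d)) by (apply lt_0_INR; lia). unfold outer_value, Rdiv.
  rewrite Rabs_mult, (Rabs_right (/ INR (S d))) by (left; now apply Rinv_0_lt_compat).
  apply Rmult_le_compat_r; [left; now apply Rinv_0_lt_compat|].
  unfold truncate, Rmax, Rmin. repeat destruct Rle_dec; unfold Rabs; repeat destruct Rcase_abs; lra.
Qed.

(* Lattice points are [1] apart and bumps have support of width [1], so at most one term is nonzero. *)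
Lemma outer_correction_bound q y : Rabs (outer_correction q y) <= B / INR (S d).
Proof.
  pose proof B_nonneg as HB0.
  unfold outer_correction. apply Rabs_rsum_one_nonzero.
  - intros k _. rewrite Rabs_mult. pose proof (clamp_range (2 - 4 * Rabs (y / T - IZR (lattice k)))).
    unfold bump. rewrite (Rabs_right (clamp _)) by lra.
    pose proof (outer_value_bound q (lattice k)). pose proof (Rabs_pos (outer_value q (lattice k))). nra.
  - intros i j Hi Hj Ni Nj. destruct (Nat.eq_dec i j) as [|Hij]; [assumption|exfalso].
    assert (Hnear : forall k, outer_value q (lattice k) * bump (y / T - IZR (lattice k)) <> 0 ->
      Rabs (y / T - IZR (lattice k)) < 1 / 2).
    { intros k Nk. destruct (Rlt_dec (Rabs (y / T - IZR (lattice k))) (1 / 2)) as [|Hfar]; [assumption|].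
      exfalso. apply Nk. rewrite bump_far by lra. ring. }
    pose proof (Hnear i Ni). pose proof (Hnear j Nj).
    assert (Hl : (lattice i - lattice j <> 0)%Z) by (unfold lattice; lia).
    pose proof (IZR_abs_ge1 _ Hl). rewrite minus_IZR in *.
    replace (IZR (lattice i) - IZR (lattice j))
      with ((y / T - IZR (lattice j)) - (y / T - IZR (lattice i))) in * by ring.
    unfold Rabs in *. repeat destruct Rcase_abs; lra.
  - apply Rle_mult_inv_pos; [exact HB0 | apply lt_0_INR; lia].
Qed.

Lemma outer_correction_lipschitz q :
  lipschitz (INR (S (2 * code_range)) * (B / INR (S d) * (4 * Rabs (/ T)))) (outer_correction q).
Proof.
  apply lipschitz_rsum. intros k Hk. eapply lipschitz_le.
  - apply (lipschitz_scal (4 * Rabs (/ T)) (outer_value q (lattice k)) (fun y => bump (y / T - IZR (lattice k)))).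
    intros a b. replace (a / T - IZR (lattice k)) with (/ T * a + - IZR (lattice k)) by (field; lra).
    replace (b / T - IZR (lattice k)) with (/ T * b + - IZR (lattice k)) by (field; lra).
    apply (lipschitz_affine 4 bump), bump_lipschitz.
  - apply Rmult_le_compat_r; [pose proof (Rabs_pos (/ T)); lra | apply outer_value_bound].
Qed.

Lemma outer_correction_lattice q z :
  (Z.abs z <= Z.of_nat code_range)%Z -> outer_correction q (T * IZR z) = outer_value q z.
Proof.
  intros Hz. unfold outer_correction. rewrite (rsum_single _ _ (Z.to_nat (z + Z.of_nat code_range))); [| lia |].
  - unfold lattice. rewrite Z2Nat.id by lia. replace (z + Z.of_nat code_range - Z.of_nat code_range)%Z with z by ring.
    replace (T * IZR z / T - IZR z) with 0 by (field; lra). unfold bump. rewrite Rabs_R0, clamp_1; lra.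
  - intros k Hk Hne. rewrite bump_far; [ring|].
    replace (T * IZR z / T - IZR (lattice k)) with (IZR (z - lattice k)) by (rewrite minus_IZR; field; lra).
    apply Rle_trans with 1; [lra|]. apply IZR_abs_ge1. unfold lattice. lia.
Qed.

Lemma outer_correction_off_ramps q x : (q < nq d)%nat -> in_cube d x -> off_ramps q x ->
  Rabs (outer_correction q (inner_sum q x) - r x / INR (S d)) <= e / INR (S d).
Proof.
  intros Hq Hx Hoff. destruct (inner_sum_off_ramps q x Hq Hx Hoff) as [kp [Hkp Ex]].
  set (c := box_code q kp) in Ex.
  assert (Hc : (Z.abs c <= Z.of_nat code_range)%Z).
  { pose proof (inner_sum_bound q x Hq Hx) as Hb. rewrite Ex, Rabs_mult, (Rabs_right T), <- abs_IZR in Hb by lra.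
    assert (Hc' : IZR (Z.abs c) <= INR d * (C + refined_inner_err) / T)
      by (apply Rmult_le_reg_l with T; [exact HT|]; field_simplify; lra).
    unfold code_range. destruct (archimed (INR d * (C + refined_inner_err) / T)) as [A _].
    pose proof (IZR_le _ _ (Z.abs_nonneg c)).
    rewrite Z2Nat.id by (apply le_IZR; lra). apply le_IZR. lra. }
  rewrite Ex, outer_correction_lattice by exact Hc. unfold outer_value.
  set (xs := epsilon _ _).
  assert (Hxs : in_cube d xs /\ off_ramps q xs /\ inner_sum q xs = T * IZR c)
    by (apply epsilon_spec; now exists x).
  destruct Hxs as [Hxs [Hoffs Exs]].
  destruct (inner_sum_off_ramps q xs Hq Hxs Hoffs) as [kp' [Hkp' Ex']].
  assert (Hsame : forall p, (p < d)%nat -> kp' p = kp p).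
  { apply (box_code_inj q); [intros p Hp; apply Hkp' | intros p Hp; apply Hkp|]; auto.
    apply eq_IZR, (Rmult_eq_reg_l T); [rewrite <- Ex', Exs; reflexivity | lra]. }
  assert (Hclose : Rabs (r xs - r x) <= e).
  { apply Hr; auto. intros p Hp. destruct (Hkp p Hp) as [_ A]. destruct (Hkp' p Hp) as [_ A'].
    rewrite Hsame in A' by exact Hp. unfold Rabs; destruct Rcase_abs; lra. }
  assert (Htr : truncate (r xs) = r xs).
  { pose proof (HB xs Hxs) as Hb. revert Hb. unfold truncate, Rmax, Rmin, Rabs.
    repeat destruct Rle_dec; destruct Rcase_abs; lra. }
  rewrite Htr. assert (HSd : 0 < INR (S d)) by (apply lt_0_INR; lia).
  replace (r xs / INR (S d) - r x / INR (S d)) with ((r xs - r x) / INR (S d)) by (field; lra).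
  unfold Rdiv. rewrite Rabs_mult, (Rabs_right (/ INR (S d))) by (left; now apply Rinv_0_lt_compat).
  apply Rmult_le_compat_r; [left; now apply Rinv_0_lt_compat | exact Hclose].
Qed.

Lemma outer_inner_estimate x : in_cube d x ->
  Rabs (r x - rsum (nq d) (fun q => outer_correction q (inner_sum q x))) <= INR d / INR (S d) * B + 2 * e.
Proof.
  intros Hx.
  pose proof (Hr x x Hx Hx) as He. rewrite Rminus_diag, Rabs_R0 in He.
  specialize (He ltac:(intros; rewrite Rminus_diag, Rabs_R0; apply Rlt_le, cell_pos, HN)).
  apply (split_sum_estimate d _ (fun q => indicator (~ off_ramps q x))); auto.
  - intros q _. unfold indicator. destruct excluded_middle_informative; auto.
  - apply count_not_off_ramps.
  - intros q Hq. unfold indicator. assert (HSd : 0 < INR (S d)) by (apply lt_0_INR; lia).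
    destruct excluded_middle_informative as [Hbad|Hgood].
    + rewrite Rminus_diag, Rmult_0_l, Rminus_0_r, Rmult_0_l, Rplus_0_l, Rmult_1_l. apply outer_correction_bound.
    + apply NNPP in Hgood. rewrite Rminus_0_r, !Rmult_1_l, Rmult_0_l, Rplus_0_r.
      now apply outer_correction_off_ramps.
Qed.

End Outer.

End Refinement.

(** * Approximate Kolmogorov-Arnold representations *)

Definition ka_sum (d : nat) (phi : nat -> nat -> R -> R) (H : nat -> R -> R) (x : nat -> R) : R :=
  rsum (nq d) (fun q => H q (rsum d (fun p => phi p q (x p)))).

Definition ka_approx (d : nat) (f : (nat -> R) -> R) (B : R) : Prop :=
  exists phi H L LH C, inner_family d phi L C /\ (forall q, lipschitz LH (H q)) /\
    forall x, in_cube d x -> Rabs (f x - ka_sum d phi H x) <= B.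

Lemma ka_sum_perturb d (H : nat -> R -> R) LH (phi1 phi2 : nat -> nat -> R -> R) x y eta :
  (forall q, lipschitz LH (H q)) ->
  (forall p q, (p < d)%nat -> (q < nq d)%nat -> Rabs (phi1 p q (x p) - phi2 p q (y p)) <= eta) ->
  Rabs (ka_sum d phi1 H x - ka_sum d phi2 H y) <= INR (nq d) * (LH * (INR d * eta)).
Proof.
  intros HH Hphi. unfold ka_sum. rewrite <- rsum_minus. apply rsum_abs_le. intros q Hq.
  eapply Rle_trans; [apply HH|]. apply Rmult_le_compat_l; [exact (lipschitz_nonneg _ _ (HH q))|].
  rewrite <- rsum_minus. apply rsum_abs_le. intros p Hp. now apply Hphi.
Qed.

(* The grid is chosen so fine that [r] varies by at most [e] on a cell and the inner functions move
   by at most [tau]. *)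
Theorem ka_fit_residual d phi L C r B e tau : (1 <= d)%nat -> inner_family d phi L C ->
  (forall x, in_cube d x -> Rabs (r x) <= B) -> unif_cont_on_cube d r -> 0 < e -> 0 < tau ->
  exists phi2 L2 C2 H LH, inner_family d phi2 L2 C2 /\
    (forall p q, (p < d)%nat -> (q < nq d)%nat -> forall t, 0 <= t <= 1 -> Rabs (phi2 p q t - phi p q t) <= tau) /\
    (forall q, lipschitz LH (H q)) /\
    forall x, in_cube d x -> Rabs (r x - ka_sum d phi2 H x) <= INR d / INR (S d) * B + 2 * e.
Proof.
  intros Hd Hphi HB Hr He Htau.
  pose proof (inner_family_lipschitz_nonneg d phi L C Hd Hphi) as HL.
  destruct (Hr e He) as [delta [Hdelta Hrd]].
  destruct (archimed_cor1 (Rmin delta (tau / (4 * L + 1)))) as [N [HNr HN]];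
    [apply Rmin_glb_lt; [exact Hdelta | apply Rdiv_lt_0_compat; lra]|].
  change (/ INR N) with (cell N) in HNr. pose proof (Rmin_l delta (tau / (4 * L + 1))).
  pose proof (Rmin_r delta (tau / (4 * L + 1))). pose proof (cell_pos N HN).
  assert (HcellL : 2 * L * cell N <= tau / 2).
  { apply Rle_trans with (2 * L * (tau / (4 * L + 1))); [apply Rmult_le_compat_l; lra|].
    apply Rmult_le_reg_r with (4 * L + 1); [lra|]. field_simplify; nra. }
  pose proof (IZR_le _ _ (code_mod_ge1 d N Hd HN)) as HKb.
  set (T := tau / (4 * IZR (code_mod d N))).
  assert (HT : 0 < T) by (unfold T; apply Rdiv_lt_0_compat; lra).
  assert (Herr : refined_inner_err d N T L <= tau) by (unfold refined_inner_err, T; field_simplify; lra).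
  exists (refined_inner d N T phi), (INR (S N) * (2 * (C + 2 * T * IZR (code_mod d N)) / ramp d N)),
    (C + refined_inner_err d N T L), (outer_correction d N T phi L C r B),
    (INR (S (2 * code_range d N T L C)) * (B / INR (S d) * (4 * Rabs (/ T)))).
  split; [|split; [|split]].
  - intros p q Hp Hq. split.
    + now apply (refined_inner_lipschitz d N Hd HN T HT phi L C Hphi).
    + intros t Ht. now apply (refined_inner_bound d N Hd HN T HT phi L C HL Hphi).
  - intros p q Hp Hq t Ht. eapply Rle_trans; [|exact Herr].
    now apply (refined_inner_close d N Hd HN T HT phi L C HL Hphi).
  - intros q. now apply (outer_correction_lipschitz d N Hd HN T HT phi L C r B HB).
  - intros x Hx. apply (outer_inner_estimate d N Hd HN T HT phi L C HL Hphi r B e HB); [|exact Hx].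
    intros y z Hy Hz Hyz. apply Hrd; auto. intros p Hp. specialize (Hyz p Hp). lra.
Qed.

Lemma ka_sum_plus d phi (H H' : nat -> R -> R) x :
  ka_sum d phi (fun q y => H q y + H' q y) x = ka_sum d phi H x + ka_sum d phi H' x.
Proof. apply rsum_plus. Qed.

Lemma ka_approx_weaken d f B B' : ka_approx d f B -> B <= B' -> ka_approx d f B'.
Proof.
  intros [phi [H [L [LH [C [Hphi [HH Hb]]]]]]] Hle. exists phi, H, L, LH, C.
  split; [exact Hphi | split; [exact HH|]]. intros x Hx. specialize (Hb x Hx). lra.
Qed.

Lemma ka_approx_bound d f B : (forall x, in_cube d x -> Rabs (f x) <= B) -> ka_approx d f B.
Proof.
  intros Hf. exists (fun _ _ _ => 0), (fun _ _ => 0), 0, 0, 0. split; [|split].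
  - intros p q _ _. split; [apply lipschitz_const | intros; rewrite Rabs_R0; lra].
  - intros q. apply lipschitz_const.
  - intros x Hx. unfold ka_sum. rewrite rsum_const, Rmult_0_r, Rminus_0_r. now apply Hf.
Qed.

Lemma unif_cont_minus_lipschitz d f g K : 0 <= K -> unif_cont_on_cube d f ->
  (forall x y delta, in_cube d x -> in_cube d y -> (forall p, (p < d)%nat -> Rabs (x p - y p) <= delta) ->
    Rabs (g x - g y) <= K * delta) ->
  unif_cont_on_cube d (fun x => f x - g x).
Proof.
  intros HK Hf Hg e He. destruct (Hf (e / 2) ltac:(lra)) as [df [Hdf Hfd]].
  exists (Rmin df (e / (2 * (K + 1)))). split; [apply Rmin_glb_lt; [exact Hdf | apply Rdiv_lt_0_compat; lra]|].
  intros x y Hx Hy Hxy. pose proof (Rmin_l df (e / (2 * (K + 1)))). pose proof (Rmin_r df (e / (2 * (K + 1)))).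
  assert (A1 : Rabs (f x - f y) <= e / 2) by (apply Hfd; auto; intros p Hp; specialize (Hxy p Hp); lra).
  assert (A2 : Rabs (g x - g y) <= K * (e / (2 * (K + 1))))
    by (apply Hg; auto; intros p Hp; specialize (Hxy p Hp); lra).
  assert (A3 : K * (e / (2 * (K + 1))) <= e / 2).
  { apply Rmult_le_reg_r with (2 * (K + 1)); [lra|]. field_simplify; nra. }
  replace (f x - g x - (f y - g y)) with ((f x - f y) - (g x - g y)) by ring.
  eapply Rle_trans; [apply Rabs_triang|]. rewrite Rabs_Ropp. lra.
Qed.

Lemma ka_sum_lipschitz d phi H L LH C x y delta : inner_family d phi L C -> (forall q, lipschitz LH (H q)) ->
  (forall p, (p < d)%nat -> Rabs (x p - y p) <= delta) ->
  Rabs (ka_sum d phi H x - ka_sum d phi H y) <= INR (nq d) * (LH * (INR d * L)) * delta.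
Proof.
  intros Hphi HH Hxy. replace (INR (nq d) * (LH * (INR d * L)) * delta)
    with (INR (nq d) * (LH * (INR d * (L * delta)))) by ring.
  apply ka_sum_perturb; [exact HH|]. intros p q Hp Hq. destruct (Hphi p q Hp Hq) as [Lp _].
  eapply Rle_trans; [apply Lp|]. apply Rmult_le_compat_l; [exact (lipschitz_nonneg _ _ Lp) | now apply Hxy].
Qed.

(* The residual [r = f - ka_sum] is fitted by a refinement with inner functions moved so little
   that the old superposition changes by at most [e]. *)
Lemma ka_approx_step d f B e : (1 <= d)%nat -> unif_cont_on_cube d f -> ka_approx d f B -> 0 < e ->
  ka_approx d f (INR d / INR (S d) * B + 3 * e).
Proof.
  intros Hd Hf [phi [H [L [LH [C [Hphi [HH Hb]]]]]]] He.
  pose proof (inner_family_lipschitz_nonneg d phi L C Hd Hphi) as HL.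
  assert (HLH : 0 <= LH) by exact (lipschitz_nonneg _ _ (HH O)).
  assert (HdR : 0 <= INR d) by apply pos_INR. assert (HnqR : 0 <= INR (nq d)) by apply pos_INR.
  set (r := fun x => f x - ka_sum d phi H x).
  assert (Hr : unif_cont_on_cube d r).
  { apply (unif_cont_minus_lipschitz d f _ (INR (nq d) * (LH * (INR d * L)))); [|exact Hf|].
    - apply Rmult_le_pos; [lra | apply Rmult_le_pos; [lra | apply Rmult_le_pos; lra]].
    - intros x y delta _ _ Hxy. eapply ka_sum_lipschitz; eauto. }
  set (Ld := INR (nq d) * (LH * INR d)).
  assert (HLd : 0 <= Ld) by (apply Rmult_le_pos; [lra | apply Rmult_le_pos; lra]).
  set (tau := e / (Ld + 1)).
  assert (Htau : 0 < tau) by (unfold tau; apply Rdiv_lt_0_compat; lra).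
  destruct (ka_fit_residual d phi L C r B e tau Hd Hphi Hb Hr He Htau)
    as [phi2 [L2 [C2 [H2 [LH2 [Hphi2 [Hclose [HH2 Hb2]]]]]]]].
  exists phi2, (fun q y => H q y + H2 q y), L2, (LH + LH2), C2.
  split; [exact Hphi2 | split; [intros q; now apply lipschitz_plus|]].
  intros x Hx. rewrite ka_sum_plus.
  assert (Hmove : Rabs (ka_sum d phi H x - ka_sum d phi2 H x) <= e).
  { eapply Rle_trans.
    - apply ka_sum_perturb; [exact HH|]. intros p q Hp Hq. rewrite Rabs_minus_sym. now apply Hclose, Hx.
    - replace (INR (nq d) * (LH * (INR d * tau))) with (Ld * tau) by (unfold Ld; ring).
      unfold tau. apply Rmult_le_reg_r with (Ld + 1); [lra|]. field_simplify; nra. }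
  specialize (Hb2 x Hx). unfold r in Hb2.
  replace (f x - (ka_sum d phi2 H x + ka_sum d phi2 H2 x))
    with ((f x - ka_sum d phi H x - ka_sum d phi2 H2 x) + (ka_sum d phi H x - ka_sum d phi2 H x)) by ring.
  eapply Rle_trans; [apply Rabs_triang | lra].
Qed.

Lemma ka_approx_iter d f B0 e : (1 <= d)%nat -> unif_cont_on_cube d f -> ka_approx d f B0 -> 0 < e ->
  forall n, ka_approx d f ((INR d / INR (S d)) ^ n * B0 + 3 * e * INR (S d)).
Proof.
  intros Hd Hf HB0 He. assert (HSd : 0 < INR (S d)) by (apply lt_0_INR; lia).
  induction n.
  - apply (ka_approx_weaken _ _ _ _ HB0). rewrite pow_O. nra.
  - apply (ka_approx_weaken _ _ _ _ (ka_approx_step d f _ e Hd Hf IHn He)).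
    right. rewrite <- tech_pow_Rmult. rewrite S_INR in *. field. lra.
Qed.

Theorem cont_on_cube_ka_approx d f eps : (1 <= d)%nat -> cont_on_cube d f -> 0 < eps -> ka_approx d f eps.
Proof.
  intros Hd Hf Heps. destruct (cont_on_cube_bounded d f Hf) as [B HB].
  assert (HB0 : 0 <= B)
    by (pose proof (HB (fun _ => 0) ltac:(intros p _; lra)); pose proof (Rabs_pos (f (fun _ => 0))); lra).
  assert (HSd : 0 < INR (S d)) by (apply lt_0_INR; lia).
  set (theta := INR d / INR (S d)).
  assert (Htheta : 0 <= theta < 1).
  { unfold theta. split; [apply Rle_mult_inv_pos; [apply pos_INR | exact HSd]|].
    apply Rmult_lt_reg_r with (INR (S d)); [exact HSd|]. rewrite S_INR in *. field_simplify; lra. }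
  destruct (pow_lt_1_zero theta ltac:(rewrite Rabs_right; lra) (eps / (2 * (B + 1)))) as [n Hn];
    [apply Rdiv_lt_0_compat; lra|].
  specialize (Hn n (le_n n)). rewrite Rabs_right in Hn by (apply Rle_ge, pow_le; lra).
  apply (ka_approx_weaken _ _ _ _ (ka_approx_iter d f B (eps / (6 * INR (S d))) Hd
    (cont_on_cube_unif d f Hf) (ka_approx_bound d f B HB) ltac:(apply Rdiv_lt_0_compat; lra) n)).
  assert (theta ^ n * B <= eps / 2).
  { apply Rle_trans with (eps / (2 * (B + 1)) * B); [apply Rmult_le_compat_r; lra|].
    apply Rmult_le_reg_r with (2 * (B + 1)); [lra|]. field_simplify; nra. }
  replace (3 * (eps / (6 * INR (S d))) * INR (S d)) with (eps / 2) by (field; lra). fold theta. lra.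
Qed.

(** * RBF-KAN networks *)

Lemma gauss_inner_family d phi L C eta : inner_family d phi L C -> 0 < eta ->
  exists lp : nat -> nat -> list (R * R * R), (forall p q, pos_widths (lp p q)) /\
    forall p q, (p < d)%nat -> (q < nq d)%nat ->
      forall t, 0 <= t <= 1 -> Rabs (phi p q t - gauss_sum (lp p q) t) <= eta.
Proof.
  intros Hphi Heta.
  destruct (choice (fun (pq : nat * nat) l => pos_widths l /\ ((fst pq < d)%nat -> (snd pq < nq d)%nat ->
      forall t, 0 <= t <= 1 -> Rabs (phi (fst pq) (snd pq) t - gauss_sum l t) <= eta))) as [lp Hlp].
  - intros [p q]. simpl.
    destruct (Nat.lt_ge_cases p d) as [Hp|Hp]; [destruct (Nat.lt_ge_cases q (nq d)) as [Hq|Hq]|];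
      [|exists nil; split; [constructor | lia]..].
    destruct (Hphi p q Hp Hq) as [Lp _]. destruct (lipschitz_gauss_approximable _ _ 0 1 Lp eta Heta) as [l Hl].
    now exists l.
  - exists (fun p q => lp (p, q)). split; [intros p q; apply Hlp | intros p q; apply (Hlp (p, q))].
Qed.

Lemma gauss_outer_family (H : nat -> R -> R) LH a eta : (forall q, lipschitz LH (H q)) -> 0 < eta ->
  exists hl : nat -> list (R * R * R), (forall q, pos_widths (hl q)) /\
    forall q y, - a <= y <= a -> Rabs (H q y - gauss_sum (hl q) y) <= eta.
Proof.
  intros HH Heta.
  destruct (choice (fun q l => pos_widths l /\ forall y, - a <= y <= a -> Rabs (H q y - gauss_sum l y) <= eta))
    as [hl Hhl]; [intros q; exact (lipschitz_gauss_approximable (H q) LH (- a) a (HH q) eta Heta)|].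
  exists hl. split; intros q; apply Hhl.
Qed.

Theorem ka_gauss_approx d f eps : (1 <= d)%nat -> cont_on_cube d f -> 0 < eps ->
  exists (lp : nat -> nat -> list (R * R * R)) (hl : nat -> list (R * R * R)),
    (forall p q, pos_widths (lp p q)) /\ (forall q, pos_widths (hl q)) /\
    forall x, in_cube d x ->
      Rabs (f x - ka_sum d (fun p q => gauss_sum (lp p q)) (fun q => gauss_sum (hl q)) x) <= 3 * eps / 4.
Proof.
  intros Hd Hf Heps.
  destruct (cont_on_cube_ka_approx d f (eps / 4) Hd Hf ltac:(lra)) as [phi [H [L [LH [C [Hphi [HH Hb]]]]]]].
  assert (HLH : 0 <= LH) by exact (lipschitz_nonneg _ _ (HH O)).
  set (Qd := INR (nq d)). assert (HQd : 1 <= Qd) by (unfold Qd, nq; apply (le_INR 1); lia).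
  set (K0 := Qd * (LH * INR d)).
  assert (HK0 : 0 <= K0) by (apply Rmult_le_pos; [lra | apply Rmult_le_pos; [lra | apply pos_INR]]).
  set (eta := Rmin 1 (eps / (4 * (K0 + 1)))).
  assert (Heta : 0 < eta /\ eta <= 1)
    by (split; [apply Rmin_glb_lt; [lra | apply Rdiv_lt_0_compat; lra] | apply Rmin_l]).
  assert (HK0eta : K0 * eta <= eps / 4).
  { apply Rle_trans with (K0 * (eps / (4 * (K0 + 1)))); [apply Rmult_le_compat_l; [lra | apply Rmin_r]|].
    apply Rmult_le_reg_r with (4 * (K0 + 1)); [lra|]. field_simplify; nra. }
  destruct (gauss_inner_family d phi L C eta Hphi (proj1 Heta)) as [lp [Plp Hlp]].
  set (phi' := fun p q => gauss_sum (lp p q)).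
  destruct (gauss_outer_family H LH (INR d * (C + 1)) (eps / (4 * Qd)) HH ltac:(apply Rdiv_lt_0_compat; lra))
    as [hl [Phl Hhl]].
  exists lp, hl. split; [exact Plp | split; [exact Phl|]]. intros x Hx. fold phi'.
  assert (Hin : Rabs (ka_sum d phi H x - ka_sum d phi' H x) <= eps / 4).
  { eapply Rle_trans; [apply ka_sum_perturb; [exact HH | intros p q Hp Hq; now apply Hlp, Hx]|].
    replace (INR (nq d) * (LH * (INR d * eta))) with (K0 * eta) by (unfold K0, Qd; ring). exact HK0eta. }
  assert (Hout : Rabs (ka_sum d phi' H x - ka_sum d phi' (fun q => gauss_sum (hl q)) x) <= eps / 4).
  { unfold ka_sum. rewrite <- rsum_minus.
    replace (eps / 4) with (INR (nq d) * (eps / (4 * Qd))) by (unfold Qd in *; field; lra).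
    apply rsum_abs_le. intros q Hq. apply Hhl, Rabs_le_between, rsum_abs_le. intros p Hp.
    destruct (Hphi p q Hp Hq) as [_ HC]. pose proof (HC (x p) (Hx p Hp)).
    pose proof (Hlp p q Hp Hq (x p) (Hx p Hp)). unfold phi'.
    replace (gauss_sum (lp p q) (x p)) with (phi p q (x p) - (phi p q (x p) - gauss_sum (lp p q) (x p))) by ring.
    unfold Rminus at 1. eapply Rle_trans; [apply Rabs_triang|]. rewrite Rabs_Ropp. lra. }
  specialize (Hb x Hx).
  replace (f x - ka_sum d phi' (fun q => gauss_sum (hl q)) x) with ((f x - ka_sum d phi H x)
    + (ka_sum d phi H x - ka_sum d phi' H x) + (ka_sum d phi' H x - ka_sum d phi' (fun q => gauss_sum (hl q)) x))
    by ring.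
  eapply Rle_trans; [apply Rabs_triang|]. eapply Rle_trans; [apply Rplus_le_compat_r, Rabs_triang|]. lra.
Qed.

(* Lists of Gaussian terms are padded with terms of weight [0] and width [1]. *)
Definition gauss_term (l : list (R * R * R)) (m : nat) : R * R * R := nth m l ((0, 0), 1).
Definition gauss_weight l m : R := fst (fst (gauss_term l m)).
Definition gauss_center l m : R := snd (fst (gauss_term l m)).
Definition gauss_width l m : R := snd (gauss_term l m).

Lemma gauss_sum_padded l G t : (length l <= G)%nat ->
  gauss_sum l t = rsum G (fun m => gauss_weight l m * K ((t - gauss_center l m) / gauss_width l m)).
Proof.
  intros HG.
  transitivity (rsum (length l) (fun m => gauss_weight l m * K ((t - gauss_center l m) / gauss_width l m))).
  - clear HG. induction l as [|tr l IH]; [reflexivity|].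
    change (gauss_sum (tr :: l) t) with (fst (fst tr) * K ((t - snd (fst tr)) / snd tr) + gauss_sum l t).
    change (length (tr :: l)) with (S (length l)). rewrite rsum_succ_l, IH. reflexivity.
  - symmetry. apply rsum_zero_tail; [exact HG|]. intros m Hm.
    unfold gauss_weight, gauss_term. rewrite nth_overflow by lia. simpl. ring.
Qed.

Lemma gauss_width_pos l m : pos_widths l -> 0 < gauss_width l m.
Proof.
  intros Hl. unfold gauss_width, gauss_term. destruct (Nat.lt_ge_cases m (length l)) as [Hm|Hm].
  - unfold pos_widths in Hl. rewrite Forall_forall in Hl. apply Hl, nth_In, Hm.
  - rewrite nth_overflow by exact Hm. simpl. lra.
Qed.

Lemma rbf_kan_gauss_sums d G G' lp hl x :
  (forall p q, (p < d)%nat -> (q < nq d)%nat -> (length (lp p q) <= G)%nat) ->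
  (forall q, (q < nq d)%nat -> (length (hl q) <= G')%nat) ->
  rbf_kan d G G'
    (fun p q => gauss_weight (lp p q)) (fun p q => gauss_center (lp p q)) (fun p q => gauss_width (lp p q))
    (fun q => gauss_weight (hl q)) (fun q => gauss_center (hl q)) (fun q => gauss_width (hl q)) x
  = ka_sum d (fun p q => gauss_sum (lp p q)) (fun q => gauss_sum (hl q)) x.
Proof.
  intros HG HG'. apply rsum_ext. intros q Hq. rewrite (gauss_sum_padded (hl q) G') by auto.
  apply rsum_ext. intros m _. unfold inner. do 4 f_equal.
  apply rsum_ext. intros p Hp. symmetry. apply gauss_sum_padded, HG; assumption.
Qed.

Lemma nat_bound n (f : nat -> nat) : exists G, (1 <= G)%nat /\ forall k, (k < n)%nat -> (f k <= G)%nat.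
Proof.
  induction n as [|n [G [HG Hf]]]; [exists 1%nat; split; [lia | intros; lia]|].
  exists (Nat.max G (f n)). split; [lia|]. intros k Hk.
  destruct (Nat.eq_dec k n) as [->|]; [lia|]. specialize (Hf k ltac:(lia)). lia.
Qed.

Lemma nat_bound2 n m (f : nat -> nat -> nat) :
  exists G, (1 <= G)%nat /\ forall p q, (p < n)%nat -> (q < m)%nat -> (f p q <= G)%nat.
Proof.
  induction n as [|n [G [HG Hf]]]; [exists 1%nat; split; [lia | intros; lia]|].
  destruct (nat_bound m (f n)) as [G1 [HG1 Hf1]].
  exists (Nat.max G G1). split; [lia|]. intros p q Hp Hq.
  destruct (Nat.eq_dec p n) as [->|]; [specialize (Hf1 q Hq) | specialize (Hf p q ltac:(lia) Hq)]; lia.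
Qed.

Theorem mainTheorem2 :
  forall (d : nat), (1 <= d)%nat ->
  forall (f : (nat -> R) -> R), cont_on_cube d f ->
  forall eps : R, 0 < eps ->
  exists (G G' : nat) (w c s : nat -> nat -> nat -> R) (w' c' s' : nat -> nat -> R),
    (1 <= G)%nat /\ (1 <= G')%nat /\
    (forall p q m, (p < d)%nat -> (q < 2 * d + 1)%nat -> (m < G)%nat -> 0 < s p q m) /\
    (forall q m, (q < 2 * d + 1)%nat -> (m < G')%nat -> 0 < s' q m) /\
    exists bound : R, bound < eps /\
      forall x : nat -> R, in_cube d x -> Rabs (f x - rbf_kan d G G' w c s w' c' s' x) <= bound.
Proof.
  intros d Hd f Hf eps Heps.
  destruct (ka_gauss_approx d f eps Hd Hf Heps) as [lp [hl [Hlp [Hhl Happrox]]]].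
  destruct (nat_bound2 d (nq d) (fun p q => length (lp p q))) as [G [HG1 HG]].
  destruct (nat_bound (nq d) (fun q => length (hl q))) as [G' [HG1' HG']].
  exists G, G', (fun p q => gauss_weight (lp p q)), (fun p q => gauss_center (lp p q)),
    (fun p q => gauss_width (lp p q)),
    (fun q => gauss_weight (hl q)), (fun q => gauss_center (hl q)), (fun q => gauss_width (hl q)).
  split; [exact HG1 | split; [exact HG1' | split; [|split]]].
  - intros p q m _ _ _. apply gauss_width_pos, Hlp.
  - intros q m _ _. apply gauss_width_pos, Hhl.
  - exists (3 * eps / 4). split; [lra|]. intros x Hx.
    rewrite rbf_kan_gauss_sums by assumption. now apply Happrox.
Qed.
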